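(* Let $\vec f$ be a smooth closed plane curve parametrized by arc length with rotation number $n\ge1$. Then \[ I_0=\frac{16\pi^4}{L^3}\sum_{k\in\mathbb Z}k^3(k-n)|\hat f(k)|^2=\frac{16\pi^4}{L^3}\sum_{k\in\mathbb Z}k^2(k-n)^2|\hat f(k)|^2 . \] In particular $I_0\ge 0$, with equality if and only if the image of $\vec f$ is an $n$-fold circle.
   Context: A closed plane curve is a smooth map $\vec f:\mathbb{R}/L\mathbb{Z}\to\mathbb{R}^2$ parametrized by arc length $s$, where $L>0$ is its length. $\vec\tau=\partial_s\vec f$, $\vec\nu$ is $\vec\tau$ rotated counterclockwise by $\pi/2$, $\kappa=\partial_s^2\vec f\cdot\vec\nu$, and the rotation number is $n=\frac{1}{2\pi}\int_0^L\kappa\,ds$. Let $\tilde\kappa=\kappa-\frac1L\int_0^L\kappa\,ds$ and $I_0=L\int_0^L\tilde\kappa^2\,ds$. Identifying $\mathbb{R}^2$ with $\mathbb{C}$, $f=f_1+if_2$, and $\hat f(k)=L^{-1/2}\int_0^L f(s)e^{-2\pi i k s/L}\,ds$. An $n$-fold circle is the image of a map of the form $s\mapsto c+re^{2\pi i n (s+\sigma)/L}$ with $c\in\mathbb C$, $r>0$, $\sigma\in\mathbb R$. *)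

From Stdlib Require Import Reals Lra Lia ZArith ClassicalEpsilon.
Open Scope R_scope.

(** Riemann integral of g over [a,b]; the value is that of [RiemannInt]
    (independent of the integrability proof). Used only for continuous
    (smooth) integrands, which are Riemann integrable. *)
Definition Rint (g : R -> R) (a b : R) : R :=
  epsilon (inhabits 0%R)
    (fun I => exists pr : Riemann_integrable g a b, RiemannInt pr = I).

(** [D] is a tower of derivatives: D (S k) is the derivative of D k
    everywhere.  A function g is smooth iff g = D 0 for such a tower. *)
Definition deriv_tower (D : nat -> R -> R) : Prop :=
  forall (k : nat) (x : R), derivable_pt_lim (D k) x (D (S k) x).

(** Smooth closed plane curve f = (D1 0, D2 0), of length L, parametrized by
    arc length, with all derivatives D1 k, D2 k. *)
Definition arclength_closed_curve (D1 D2 : nat -> R -> R) (L : R) : Prop :=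
  0 < L /\ deriv_tower D1 /\ deriv_tower D2 /\
  (forall s, D1 0%nat (s + L) = D1 0%nat s /\ D2 0%nat (s + L) = D2 0%nat s) /\
  (forall s, (D1 1%nat s)^2 + (D2 1%nat s)^2 = 1).

(** curvature kappa = d^2 f/ds^2 . nu, with nu = tau rotated by +pi/2,
    tau = (f1', f2'), nu = (-f2', f1'). *)
Definition curvature (D1 D2 : nat -> R -> R) (s : R) : R :=
  - D1 2%nat s * D2 1%nat s + D2 2%nat s * D1 1%nat s.

Definition rotation_number (D1 D2 : nat -> R -> R) (L : R) : R :=
  / (2 * PI) * Rint (curvature D1 D2) 0 L.

Definition I0 (D1 D2 : nat -> R -> R) (L : R) : R :=
  let m := / L * Rint (curvature D1 D2) 0 L in
  L * Rint (fun s => (curvature D1 D2 s - m)^2) 0 L.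

(** Fourier coefficient hat f(k) = L^{-1/2} int_0^L f(s) e^{-2 pi i k s/L} ds,
    with f = f1 + i f2; we write out its real and imaginary parts. *)
Definition fhat_re (f1 f2 : R -> R) (L : R) (k : Z) : R :=
  / sqrt L * Rint (fun s => f1 s * cos (2 * PI * IZR k * s / L)
                          + f2 s * sin (2 * PI * IZR k * s / L)) 0 L.
Definition fhat_im (f1 f2 : R -> R) (L : R) (k : Z) : R :=
  / sqrt L * Rint (fun s => f2 s * cos (2 * PI * IZR k * s / L)
                          - f1 s * sin (2 * PI * IZR k * s / L)) 0 L.

Definition fhat_norm2 (f1 f2 : R -> R) (L : R) (k : Z) : R :=
  (fhat_re f1 f2 L k)^2 + (fhat_im f1 f2 L k)^2.

(** symmetric partial sums  sum_{k=-N}^{N} a k *)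
Definition sumZ_partial (a : Z -> R) (N : nat) : R :=
  sum_f_R0 (fun j => a (Z.of_nat j - Z.of_nat N)%Z) (2 * N).

Definition image_is_nfold_circle (f1 f2 : R -> R) (L : R) (n : Z) : Prop :=
  exists (c1 c2 r sigma : R), 0 < r /\
    forall x y : R,
      (exists s, f1 s = x /\ f2 s = y) <->
      (exists s, c1 + r * cos (2 * PI * IZR n * (s + sigma) / L) = x /\
                 c2 + r * sin (2 * PI * IZR n * (s + sigma) / L) = y).

(** Write [w = 2 pi n / L].  Since the curve is
    parametrized by arc length, [f'' = i kappa f'] with [|f'| = 1], so for every
    real [a] the function [g_a = f'' - i a f'] has [|g_a| = |kappa - a|].  By
    Parseval, [L int |g_a|^2] is the sum of the squared Fourier coefficients of
    [g_a], and integrating by parts twice these are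
    [(2 pi k/L)^2 (2 pi k/L - a)^2 |fhat k|^2].  Taking [a = w] gives the
    [k^2 (k - n)^2] series, since [int kappa = 2 pi n] makes [L int (kappa - w)^2]
    equal to [I0]; taking [a = w/2] and subtracting [(w/2)^2] times Parseval for
    [f'] gives the [k^3 (k - n)] series.

    Parseval's identity itself is proved for C^1 periodic functions: by the
    best-approximation property of Fourier partial sums, it suffices to
    approximate uniformly by trigonometric polynomials, and the Fejer means
    do this.

    For the equality case, [I0 = 0] forces [kappa = w > 0], and integrating
    twice gives the [n]-fold circle of radius [1/w]; conversely on a circle of
    radius [r] the quantity [(f - c) x f'] has square [r^2] and never
    vanishes, so it is constant and [kappa = -1/((f - c) x f')] is constant. *)

From Stdlib Require Import Reals ZArith Lra Lia ClassicalEpsilon.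
From Coquelicot Require Import Coquelicot.
Open Scope R_scope.

Definition continuousR (u : R -> R) : Prop := forall x, continuous u x.

Lemma cont_plus (f g : R -> R) x :
  continuous f x -> continuous g x -> continuous (fun y => f y + g y) x.
Proof. intros; apply (continuous_plus f g); auto. Qed.
Lemma cont_minus (f g : R -> R) x :
  continuous f x -> continuous g x -> continuous (fun y => f y - g y) x.
Proof. intros; apply (continuous_minus f g); auto. Qed.
Lemma cont_mult (f g : R -> R) x :
  continuous f x -> continuous g x -> continuous (fun y => f y * g y) x.
Proof. intros; apply (continuous_mult f g); auto. Qed.
Lemma cont_opp (f : R -> R) x : continuous f x -> continuous (fun y => - f y) x.
Proof. intros; apply (continuous_opp f); auto. Qed.
Lemma cont_const (c x : R) : continuous (fun _ : R => c) x.
Proof. apply continuous_const. Qed.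
Lemma cont_id (x : R) : continuous (fun y : R => y) x.
Proof. apply continuous_id. Qed.
Lemma cont_cos (f : R -> R) x : continuous f x -> continuous (fun y => cos (f y)) x.
Proof. intros; apply continuous_cos_comp; auto. Qed.
Lemma cont_sin (f : R -> R) x : continuous f x -> continuous (fun y => sin (f y)) x.
Proof. intros; apply continuous_sin_comp; auto. Qed.
Lemma cont_pow (f : R -> R) n x : continuous f x -> continuous (fun y => f y ^ n) x.
Proof. intros H; induction n; simpl; [apply cont_const | apply cont_mult; auto]. Qed.
Lemma cont_div (f : R -> R) c x : continuous f x -> continuous (fun y => f y / c) x.
Proof. intros; unfold Rdiv; apply cont_mult; auto; apply cont_const. Qed.
Lemma cont_Rmult c x : continuous (Rmult c) x.
Proof. apply (cont_mult (fun _ => c) (fun y => y)); [apply cont_const | apply cont_id]. Qed.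
Lemma cont_abs (f : R -> R) x : continuous f x -> continuous (fun y => Rabs (f y)) x.
Proof. intros; apply (continuous_comp f Rabs); auto; apply continuous_Rabs. Qed.

Definition cos_mode (L r s : R) : R := cos (2 * PI * r * s / L).
Definition sin_mode (L r s : R) : R := sin (2 * PI * r * s / L).

Lemma continuous_cos_mode L r : continuousR (cos_mode L r).
Proof. intro; apply cont_cos, cont_div, cont_mult; [apply cont_const | apply cont_id]. Qed.
Lemma continuous_sin_mode L r : continuousR (sin_mode L r).
Proof. intro; apply cont_sin, cont_div, cont_mult; [apply cont_const | apply cont_id]. Qed.

Ltac continuity_tac := repeat match goal with
  | |- continuous (fun _ => ?c) _ => apply cont_const
  | |- continuous (fun y => y) _ => apply cont_id
  | |- continuous (Rmult _) _ => apply cont_Rmult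
  | |- continuous (fun y => _ + _) _ => apply cont_plus
  | |- continuous (fun y => _ - _) _ => apply cont_minus
  | |- continuous (fun y => _ * _) _ => apply cont_mult
  | |- continuous (fun y => _ / _) _ => apply cont_div
  | |- continuous (fun y => - _) _ => apply cont_opp
  | |- continuous (fun y => cos _) _ => apply cont_cos
  | |- continuous (fun y => sin _) _ => apply cont_sin
  | |- continuous (fun y => _ ^ _) _ => apply cont_pow
  | |- continuous (fun y => Rabs _) _ => apply cont_abs
  | |- continuous (cos_mode ?L ?r) _ => apply (continuous_cos_mode L r)
  | |- continuous (fun y => cos_mode ?L ?r y) _ => apply (continuous_cos_mode L r)
  | |- continuous (sin_mode ?L ?r) _ => apply (continuous_sin_mode L r)
  | |- continuous (fun y => sin_mode ?L ?r y) _ => apply (continuous_sin_mode L r)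
  | H : continuousR ?u |- continuous ?u _ => apply H
  | H : continuousR ?u |- continuous (fun y => ?u y) _ => apply H
  | H : forall k : nat, continuousR (?D k) |- continuous (?D ?k) _ => apply (H k)
  | H : forall k : nat, continuousR (?D k) |- continuous (fun y => ?D ?k y) _ =>
      apply (H k)
  end.

Ltac continuity_R := intro; continuity_tac.

Ltac real_eq := match goal with |- ?a = ?b => change (@eq R a b) end.

Lemma continuousR_of_derive (u du : R -> R) :
  (forall x, derivable_pt_lim u x (du x)) -> continuousR u.
Proof.
  intros H x; apply (ex_derive_continuous (K := R_AbsRing) (V := R_NormedModule)).
  exists (du x); apply is_derive_Reals; auto.
Qed.

Lemma continuity_pt_of_continuous (f : R -> R) x : continuous f x -> continuity_pt f x.
Proof. intro H; apply continuity_pt_filterlim; exact H. Qed.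

Lemma ex_RInt_continuousR (g : R -> R) a b : continuousR g -> ex_RInt g a b.
Proof. intros; apply (ex_RInt_continuous (V := R_CompleteNormedModule)); auto. Qed.

Lemma Rint_RInt (g : R -> R) a b : a <= b -> continuousR g -> Rint g a b = RInt g a b.
Proof.
  intros Hab Hg.
  assert (Hr : Riemann_integrable g a b)
    by (apply ex_RInt_Reals_0; apply ex_RInt_continuousR; auto).
  unfold Rint.
  destruct (epsilon_spec (inhabits 0)
              (fun I => exists pr : Riemann_integrable g a b, RiemannInt pr = I))
    as [pr <-]; [now exists (RiemannInt Hr), Hr |].
  now rewrite RInt_Reals with (pr := pr).
Qed.

Lemma RInt_plusR (f g : R -> R) a b : continuousR f -> continuousR g ->
  RInt (fun x => f x + g x) a b = RInt f a b + RInt g a b :> R.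
Proof.
  intros; apply (RInt_plus (V := R_CompleteNormedModule) f g);
    apply ex_RInt_continuousR; auto.
Qed.
Lemma RInt_minusR (f g : R -> R) a b : continuousR f -> continuousR g ->
  RInt (fun x => f x - g x) a b = RInt f a b - RInt g a b :> R.
Proof.
  intros; apply (RInt_minus (V := R_CompleteNormedModule) f g);
    apply ex_RInt_continuousR; auto.
Qed.
Lemma RInt_scalR (f : R -> R) c a b : continuousR f ->
  RInt (fun x => c * f x) a b = c * RInt f a b :> R.
Proof. intros; apply (RInt_scal (V := R_CompleteNormedModule) f); apply ex_RInt_continuousR; auto. Qed.
Lemma RInt_constR (c a b : R) : RInt (fun _ => c) a b = (b - a) * c :> R.
Proof. rewrite RInt_const; reflexivity. Qed.
Lemma RInt_extR (f g : R -> R) a b : (forall x, f x = g x) -> RInt f a b = RInt g a b :> R.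
Proof. intros H; apply RInt_ext; intros; auto. Qed.
Lemma RInt_leR (f g : R -> R) a b : a <= b -> continuousR f -> continuousR g ->
  (forall x, a <= x <= b -> f x <= g x) -> RInt f a b <= RInt g a b.
Proof. intros; apply RInt_le; auto; try apply ex_RInt_continuousR; auto; intros; apply H2; lra. Qed.
Lemma RInt_ge0 (f : R -> R) a b : a <= b -> continuousR f ->
  (forall x, a <= x <= b -> 0 <= f x) -> 0 <= RInt f a b.
Proof.
  intros; rewrite <- (Rmult_0_r (b - a)), <- RInt_constR.
  apply RInt_leR; auto; intro; apply cont_const.
Qed.
Lemma abs_RInt_leR (f : R -> R) a b : a <= b -> continuousR f ->
  Rabs (RInt f a b) <= RInt (fun t => Rabs (f t)) a b.
Proof. intros; apply abs_RInt_le; auto; apply ex_RInt_continuousR; auto. Qed.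

Lemma RInt_derive (F f : R -> R) a b : (forall x, is_derive F x (f x)) -> continuousR f ->
  RInt f a b = F b - F a :> R.
Proof.
  intros HF Hf; apply is_RInt_unique.
  apply (is_RInt_derive (V := R_CompleteNormedModule) F f); intros; auto.
Qed.
Lemma sin_2PI_mult_IZR z : sin (2 * PI * IZR z) = 0.
Proof. apply sin_eq_0_1; exists (2 * z)%Z; rewrite mult_IZR; simpl; lra. Qed.
Lemma cos_2PI_mult_IZR z : cos (2 * PI * IZR z) = 1.
Proof.
  replace (2 * PI * IZR z) with (2 * (IZR z * PI)) by ring.
  rewrite cos_2a_sin, sin_eq_0_1 by (exists z; reflexivity); ring.
Qed.

Definition kronecker (z : Z) : R := if Z.eq_dec z 0 then 1 else 0.

Lemma cos_mode0 L s : cos_mode L 0 s = 1.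
Proof. unfold cos_mode; replace (2 * PI * 0 * s / L) with 0 by (unfold Rdiv; ring); apply cos_0. Qed.
Lemma sin_mode0 L s : sin_mode L 0 s = 0.
Proof. unfold sin_mode; replace (2 * PI * 0 * s / L) with 0 by (unfold Rdiv; ring); apply sin_0. Qed.

Lemma RInt_cos_mode L z : 0 < L -> RInt (cos_mode L (IZR z)) 0 L = L * kronecker z :> R.
Proof.
  intros HL; unfold kronecker; destruct (Z.eq_dec z 0) as [->|Hz].
  { rewrite (RInt_extR _ (fun _ => 1)) by apply cos_mode0; rewrite RInt_constR; ring. }
  assert (HzR : IZR z <> 0) by (apply not_0_IZR; auto).
  assert (HP := PI_neq0).
  rewrite (RInt_derive (fun s => L / (2 * PI * IZR z) * sin (2 * PI * IZR z * s / L))).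
  - replace (2 * PI * IZR z * L / L) with (2 * PI * IZR z) by (field; lra).
    replace (2 * PI * IZR z * 0 / L) with 0 by (field; lra).
    rewrite sin_2PI_mult_IZR, sin_0; ring.
  - intro x; unfold cos_mode; auto_derive; [repeat split; lra |].
    real_eq; unfold Rdiv; field; repeat split; lra.
  - apply continuous_cos_mode.
Qed.

Lemma RInt_sin_mode L z : 0 < L -> RInt (sin_mode L (IZR z)) 0 L = 0 :> R.
Proof.
  intros HL; destruct (Z.eq_dec z 0) as [->|Hz].
  { rewrite (RInt_extR _ (fun _ => 0)) by apply sin_mode0; rewrite RInt_constR; ring. }
  assert (HzR : IZR z <> 0) by (apply not_0_IZR; auto).
  assert (HP := PI_neq0).
  rewrite (RInt_derive (fun s => - (L / (2 * PI * IZR z)) * cos (2 * PI * IZR z * s / L))).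
  - replace (2 * PI * IZR z * L / L) with (2 * PI * IZR z) by (field; lra).
    replace (2 * PI * IZR z * 0 / L) with 0 by (field; lra).
    rewrite cos_2PI_mult_IZR, cos_0; ring.
  - intro x; unfold sin_mode; auto_derive; [repeat split; lra |].
    real_eq; unfold Rdiv; field; repeat split; lra.
  - apply continuous_sin_mode.
Qed.

Lemma mode_arg_sum L j k s :
  2 * PI * (j + k) * s / L = 2 * PI * j * s / L + 2 * PI * k * s / L.
Proof. unfold Rdiv; ring. Qed.
Lemma mode_arg_diff L j k s :
  2 * PI * (j - k) * s / L = 2 * PI * j * s / L - 2 * PI * k * s / L.
Proof. unfold Rdiv; ring. Qed.

Lemma cos_mode_mul L j k s :
  cos_mode L j s * cos_mode L k s = / 2 * (cos_mode L (j - k) s + cos_mode L (j + k) s).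
Proof. unfold cos_mode; rewrite mode_arg_sum, mode_arg_diff, cos_minus, cos_plus; field. Qed.
Lemma sin_mode_mul L j k s :
  sin_mode L j s * sin_mode L k s = / 2 * (cos_mode L (j - k) s - cos_mode L (j + k) s).
Proof.
  unfold cos_mode, sin_mode; rewrite mode_arg_sum, mode_arg_diff, cos_minus, cos_plus; field.
Qed.
Lemma cos_sin_mode_mul L j k s :
  cos_mode L j s * sin_mode L k s = / 2 * (sin_mode L (j + k) s - sin_mode L (j - k) s).
Proof.
  unfold cos_mode, sin_mode; rewrite mode_arg_sum, mode_arg_diff, sin_minus, sin_plus; field.
Qed.

Lemma RInt_cos_cos_mode L j k : 0 < L ->
  RInt (fun s => cos_mode L (IZR j) s * cos_mode L (IZR k) s) 0 L
  = L / 2 * (kronecker (j - k) + kronecker (j + k)) :> R.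
Proof.
  intros HL; rewrite (RInt_extR _ (fun s => / 2 * (cos_mode L (IZR (j - k)) s
                                               + cos_mode L (IZR (j + k)) s))).
  - rewrite RInt_scalR, RInt_plusR, !RInt_cos_mode by (auto; continuity_R); field.
  - intro s; rewrite cos_mode_mul, minus_IZR, plus_IZR; reflexivity.
Qed.
Lemma RInt_sin_sin_mode L j k : 0 < L ->
  RInt (fun s => sin_mode L (IZR j) s * sin_mode L (IZR k) s) 0 L
  = L / 2 * (kronecker (j - k) - kronecker (j + k)) :> R.
Proof.
  intros HL; rewrite (RInt_extR _ (fun s => / 2 * (cos_mode L (IZR (j - k)) s
                                               - cos_mode L (IZR (j + k)) s))).
  - rewrite RInt_scalR, RInt_minusR, !RInt_cos_mode by (auto; continuity_R); field.
  - intro s; rewrite sin_mode_mul, minus_IZR, plus_IZR; reflexivity.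
Qed.
Lemma RInt_cos_sin_mode L j k : 0 < L ->
  RInt (fun s => cos_mode L (IZR j) s * sin_mode L (IZR k) s) 0 L = 0 :> R.
Proof.
  intros HL; rewrite (RInt_extR _ (fun s => / 2 * (sin_mode L (IZR (j + k)) s
                                               - sin_mode L (IZR (j - k)) s))).
  - rewrite RInt_scalR, RInt_minusR, !RInt_sin_mode by (auto; continuity_R); ring.
  - intro s; rewrite cos_sin_mode_mul, minus_IZR, plus_IZR; reflexivity.
Qed.
Lemma kronecker_0 : kronecker 0 = 1.
Proof. reflexivity. Qed.
Lemma kronecker_neq z : z <> 0%Z -> kronecker z = 0.
Proof. unfold kronecker; destruct (Z.eq_dec z 0); [lia | reflexivity]. Qed.

Fixpoint sum_lt (f : nat -> R) (n : nat) : R :=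
  match n with O => 0 | S k => sum_lt f k + f k end.

Lemma sum_lt_ext f g n : (forall m, (m < n)%nat -> f m = g m) -> sum_lt f n = sum_lt g n.
Proof. induction n; simpl; intros; auto; rewrite IHn, H; auto. Qed.
Lemma sum_lt_plus f g n : sum_lt (fun m => f m + g m) n = sum_lt f n + sum_lt g n.
Proof. induction n; simpl; [ring | rewrite IHn; ring]. Qed.
Lemma sum_lt_scal c f n : sum_lt (fun m => c * f m) n = c * sum_lt f n.
Proof. induction n; simpl; [ring | rewrite IHn; ring]. Qed.
Lemma sum_lt_mult_r f c n : sum_lt f n * c = sum_lt (fun m => f m * c) n.
Proof. induction n; simpl; [ring | rewrite <- IHn; ring]. Qed.
Lemma sum_lt_zero n : sum_lt (fun _ => 0) n = 0.
Proof. induction n; simpl; [reflexivity | rewrite IHn; ring]. Qed.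
Lemma sum_lt_ge0 f n : (forall m, 0 <= f m) -> 0 <= sum_lt f n.
Proof. intros H; induction n; simpl; [lra | specialize (H n); lra]. Qed.
Lemma sum_lt_shift f n : sum_lt f (S n) = f O + sum_lt (fun k => f (S k)) n.
Proof. induction n; [simpl; ring |]; change (sum_lt f (S (S n))) with (sum_lt f (S n) + f (S n)).
  rewrite IHn; simpl; ring. Qed.
Lemma sum_lt_rev f n : sum_lt f n = sum_lt (fun k => f (n - S k)%nat) n.
Proof.
  induction n; [reflexivity |].
  change (sum_lt f (S n)) with (sum_lt f n + f n).
  rewrite (sum_lt_shift (fun k => f (S n - S k)%nat)), IHn, Rplus_comm.
  replace (S n - 1)%nat with n by lia; reflexivity.
Qed.

Lemma continuous_sum_lt (F : nat -> R -> R) n :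
  (forall m, continuousR (F m)) -> continuousR (fun x => sum_lt (fun m => F m x) n).
Proof. intros H; induction n; simpl; intro x; [apply cont_const | apply cont_plus; [apply IHn | apply H]]. Qed.

Lemma RInt_sum_lt (F : nat -> R -> R) n a b : (forall m, continuousR (F m)) ->
  RInt (fun x => sum_lt (fun m => F m x) n) a b = sum_lt (fun m => RInt (F m) a b) n :> R.
Proof.
  intros H; induction n; simpl; [rewrite RInt_constR; ring |].
  rewrite RInt_plusR, IHn; auto; apply continuous_sum_lt; auto.
Qed.

Definition cos_coef (L : R) (u : R -> R) (r : R) : R := RInt (fun s => u s * cos_mode L r s) 0 L.
Definition sin_coef (L : R) (u : R -> R) (r : R) : R := RInt (fun s => u s * sin_mode L r s) 0 L.

Definition trig_term (L : R) (a b : nat -> R) (m : nat) (x : R) : R :=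
  a m * cos_mode L (INR m) x + b m * sin_mode L (INR m) x.
Definition trig_poly (L : R) (a b : nat -> R) (N : nat) (x : R) : R :=
  sum_lt (fun m => trig_term L a b m x) (S N).

(** Partial sums of Parseval's series [L int u^2 = C_0^2 + 2 sum_(m>0) (C_m^2 + S_m^2)]. *)
Definition mode_weight (m : nat) : R := match m with O => 1 | S _ => 2 end.
Definition bessel_sum (L : R) (u : R -> R) (N : nat) : R :=
  sum_lt (fun m => mode_weight m * (cos_coef L u (INR m) ^ 2 + sin_coef L u (INR m) ^ 2)) (S N).

Definition approx_defect (L : R) (u : R -> R) (a b : nat -> R) (m : nat) : R :=
  match m with
  | O => (cos_coef L u 0 - L * a O) ^ 2
  | S _ => 2 * ((cos_coef L u (INR m) - L * a m / 2) ^ 2 + (sin_coef L u (INR m) - L * b m / 2) ^ 2)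
  end.

Lemma continuous_trig_term L a b m : continuousR (trig_term L a b m).
Proof. unfold trig_term; continuity_R. Qed.
Lemma continuous_trig_poly L a b N : continuousR (trig_poly L a b N).
Proof. apply (continuous_sum_lt (trig_term L a b)), continuous_trig_term. Qed.

Lemma sin_coef_0 L u : sin_coef L u 0 = 0.
Proof.
  unfold sin_coef; rewrite (RInt_extR _ (fun _ => 0)) by (intro; rewrite sin_mode0; ring).
  rewrite RInt_constR; ring.
Qed.
Lemma cos_coef_0 L u : cos_coef L u 0 = RInt u 0 L.
Proof. unfold cos_coef; apply RInt_extR; intro; rewrite cos_mode0; ring. Qed.

Lemma RInt_trig_term_orth L a b m K c d : 0 < L -> (m < K)%nat ->
  RInt (fun x => trig_term L a b m x * (c * cos_mode L (INR K) x + d * sin_mode L (INR K) x)) 0 L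
  = 0 :> R.
Proof.
  intros HL HmK; unfold trig_term; rewrite !INR_IZR_INZ.
  set (M := Z.of_nat m); set (K' := Z.of_nat K).
  rewrite (RInt_extR _ (fun x =>
       (a m * c * (cos_mode L (IZR M) x * cos_mode L (IZR K') x)
      + a m * d * (cos_mode L (IZR M) x * sin_mode L (IZR K') x))
      + (b m * c * (cos_mode L (IZR K') x * sin_mode L (IZR M) x)
      + b m * d * (sin_mode L (IZR M) x * sin_mode L (IZR K') x))))
    by (intro; ring).
  rewrite !RInt_plusR, !RInt_scalR by continuity_R.
  rewrite RInt_cos_cos_mode, RInt_sin_sin_mode, !RInt_cos_sin_mode, !kronecker_neq by (lia || auto).
  ring.
Qed.

Lemma RInt_mode_comb_sq L K c d : 0 < L -> (0 < K)%nat ->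
  RInt (fun x => (c * cos_mode L (INR K) x + d * sin_mode L (INR K) x) ^ 2) 0 L
  = L / 2 * (c ^ 2 + d ^ 2) :> R.
Proof.
  intros HL HK; rewrite !INR_IZR_INZ; set (K' := Z.of_nat K).
  rewrite (RInt_extR _ (fun x =>
       (c ^ 2 * (cos_mode L (IZR K') x * cos_mode L (IZR K') x)
      + 2 * c * d * (cos_mode L (IZR K') x * sin_mode L (IZR K') x))
      + d ^ 2 * (sin_mode L (IZR K') x * sin_mode L (IZR K') x)))
    by (intro; ring).
  rewrite !RInt_plusR, !RInt_scalR by continuity_R.
  rewrite RInt_cos_cos_mode, RInt_sin_sin_mode, RInt_cos_sin_mode by auto.
  rewrite Z.sub_diag, kronecker_0, kronecker_neq by lia; field.
Qed.

Lemma RInt_trig_poly_orth L a b N c d : 0 < L ->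
  RInt (fun x => trig_poly L a b N x
                 * (c * cos_mode L (INR (S N)) x + d * sin_mode L (INR (S N)) x)) 0 L = 0 :> R.
Proof.
  intros HL; unfold trig_poly.
  rewrite (RInt_extR _ (fun x => sum_lt (fun m => trig_term L a b m x
            * (c * cos_mode L (INR (S N)) x + d * sin_mode L (INR (S N)) x)) (S N)))
    by (intro; apply sum_lt_mult_r).
  rewrite RInt_sum_lt by (intro m; pose proof (continuous_trig_term L a b m); continuity_R).
  rewrite (sum_lt_ext _ (fun _ => 0)) by (intros; apply RInt_trig_term_orth; auto).
  apply sum_lt_zero.
Qed.

Lemma RInt_mul_mode_comb L u c d r : continuousR u ->
  RInt (fun x => u x * (c * cos_mode L r x + d * sin_mode L r x)) 0 L
  = c * cos_coef L u r + d * sin_coef L u r :> R.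
Proof.
  intros Hu; unfold cos_coef, sin_coef; rewrite <- !RInt_scalR, <- RInt_plusR by continuity_R.
  apply RInt_extR; intro; ring.
Qed.

(** Every [approx_defect] is a sum of squares vanishing exactly at the Fourier
    coefficients: this is the best-approximation property of Fourier partial sums. *)
Lemma trig_poly_error L u a b N : 0 < L -> continuousR u ->
  L * RInt (fun x => (u x - trig_poly L a b N x) ^ 2) 0 L
  = L * RInt (fun x => u x ^ 2) 0 L - bessel_sum L u N + sum_lt (approx_defect L u a b) (S N) :> R.
Proof.
  intros HL Hu; induction N.
  - unfold trig_poly, bessel_sum; cbn [sum_lt approx_defect mode_weight].
    rewrite (RInt_extR _ (fun x => u x ^ 2 - (2 * a O) * u x + a O ^ 2))
      by (intro; unfold trig_term; rewrite cos_mode0, sin_mode0; ring).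
    rewrite RInt_plusR, RInt_minusR, RInt_scalR, RInt_constR by continuity_R.
    change (INR 0) with 0; rewrite sin_coef_0, cos_coef_0; ring.
  - set (t := fun x => a (S N) * cos_mode L (INR (S N)) x + b (S N) * sin_mode L (INR (S N)) x).
    assert (Ht : continuousR t) by (unfold t; continuity_R).
    pose proof (continuous_trig_poly L a b N) as HP.
    rewrite (RInt_extR _ (fun x => ((u x - trig_poly L a b N x) ^ 2 - 2 * (u x * t x))
                                   + 2 * (trig_poly L a b N x * t x) + t x ^ 2))
      by (intro; change (trig_poly L a b (S N) x) with (trig_poly L a b N x + t x); ring).
    rewrite !RInt_plusR, RInt_minusR, !RInt_scalR by continuity_R.
    unfold t; rewrite RInt_trig_poly_orth, RInt_mul_mode_comb, RInt_mode_comb_sq by (lia || auto).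
    change (bessel_sum L u (S N))
      with (bessel_sum L u N + 2 * (cos_coef L u (INR (S N)) ^ 2 + sin_coef L u (INR (S N)) ^ 2)).
    change (sum_lt (approx_defect L u a b) (S (S N)))
      with (sum_lt (approx_defect L u a b) (S N) + approx_defect L u a b (S N)).
    change (approx_defect L u a b (S N)) with
      (2 * ((cos_coef L u (INR (S N)) - L * a (S N) / 2) ^ 2
            + (sin_coef L u (INR (S N)) - L * b (S N) / 2) ^ 2)).
    set (E := RInt (fun x => (u x - trig_poly L a b N x) ^ 2) 0 L) in *.
    transitivity (L * E
      - L * 2 * (a (S N) * cos_coef L u (INR (S N)) + b (S N) * sin_coef L u (INR (S N)))
      + L * L / 2 * (a (S N) ^ 2 + b (S N) ^ 2)); [field |].
    rewrite IHN; field.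
Qed.

Lemma bessel_inequality L u N : 0 < L -> continuousR u ->
  bessel_sum L u N <= L * RInt (fun x => u x ^ 2) 0 L.
Proof.
  intros HL Hu.
  set (a := fun m => match m with O => cos_coef L u 0 / L | S _ => 2 * cos_coef L u (INR m) / L end).
  set (b := fun m => 2 * sin_coef L u (INR m) / L).
  assert (Hz : sum_lt (approx_defect L u a b) (S N) = 0).
  { rewrite <- (sum_lt_zero (S N)); apply sum_lt_ext.
    intros [|m] _; unfold approx_defect, a, b; field; lra. }
  generalize (trig_poly_error L u a b N HL Hu); rewrite Hz; intro E.
  assert (0 <= L * RInt (fun x => (u x - trig_poly L a b N x) ^ 2) 0 L); [|lra].
  apply Rmult_le_pos; [lra |]; apply RInt_ge0; [lra | | intros; apply pow2_ge_0].
  pose proof (continuous_trig_poly L a b N); continuity_R.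
Qed.

Lemma bessel_defect_le L u a b N : 0 < L -> continuousR u ->
  L * RInt (fun x => u x ^ 2) 0 L - bessel_sum L u N
  <= L * RInt (fun x => (u x - trig_poly L a b N x) ^ 2) 0 L.
Proof.
  intros HL Hu; rewrite trig_poly_error by auto.
  assert (0 <= sum_lt (approx_defect L u a b) (S N)); [|lra].
  apply sum_lt_ge0; intros [|m]; unfold approx_defect; [apply pow2_ge_0 |].
  generalize (pow2_ge_0 (cos_coef L u (INR (S m)) - L * a (S m) / 2))
             (pow2_ge_0 (sin_coef L u (INR (S m)) - L * b (S m) / 2)); lra.
Qed.
Lemma cos_mode_S L k y :
  cos_mode L (INR (S k)) y = cos_mode L (INR k) y * cos_mode L 1 y - sin_mode L (INR k) y * sin_mode L 1 y.
Proof. unfold cos_mode, sin_mode; rewrite S_INR, <- cos_plus; f_equal; unfold Rdiv; ring. Qed.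
Lemma sin_mode_S L k y :
  sin_mode L (INR (S k)) y = sin_mode L (INR k) y * cos_mode L 1 y + cos_mode L (INR k) y * sin_mode L 1 y.
Proof. unfold cos_mode, sin_mode; rewrite S_INR, <- sin_plus; f_equal; unfold Rdiv; ring. Qed.
Lemma cos_mode_sq_add_sin_mode_sq L r y : cos_mode L r y ^ 2 + sin_mode L r y ^ 2 = 1.
Proof. unfold cos_mode, sin_mode; generalize (sin2_cos2 (2 * PI * r * y / L)); unfold Rsqr; nra. Qed.
Lemma cos_mode_diff L j k y : (k <= j)%nat ->
  cos_mode L (INR k) y * cos_mode L (INR j) y + sin_mode L (INR k) y * sin_mode L (INR j) y
  = cos_mode L (INR (j - k)) y.
Proof.
  intros H; unfold cos_mode, sin_mode; rewrite minus_INR, mode_arg_diff, cos_minus by auto; ring.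
Qed.
Lemma cos_mode_sub L r s x :
  cos_mode L r (s - x) = cos_mode L r s * cos_mode L r x + sin_mode L r s * sin_mode L r x.
Proof. unfold cos_mode, sin_mode; rewrite <- cos_minus; f_equal; unfold Rdiv; ring. Qed.

Definition cos_mode_sum (L : R) (N : nat) (y : R) : R := sum_lt (fun k => cos_mode L (INR k) y) (S N).
Definition sin_mode_sum (L : R) (N : nat) (y : R) : R := sum_lt (fun k => sin_mode L (INR k) y) (S N).

(** The real and imaginary parts of the geometric sum [(z^(N+1) - 1) = (z - 1) sum_(k<=N) z^k]
    for [z = e^(2 pi i y/L)]. *)
Lemma mode_sum_geometric L N y :
  cos_mode_sum L N y * (cos_mode L 1 y - 1) - sin_mode_sum L N y * sin_mode L 1 y
    = cos_mode L (INR (S N)) y - 1 /\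
  cos_mode_sum L N y * sin_mode L 1 y + sin_mode_sum L N y * (cos_mode L 1 y - 1)
    = sin_mode L (INR (S N)) y.
Proof.
  induction N as [|N [H1 H2]].
  - unfold cos_mode_sum, sin_mode_sum; cbn [sum_lt]; change (INR 0) with 0; change (INR 1) with 1.
    rewrite cos_mode0, sin_mode0; split; ring.
  - change (cos_mode_sum L (S N) y) with (cos_mode_sum L N y + cos_mode L (INR (S N)) y).
    change (sin_mode_sum L (S N) y) with (sin_mode_sum L N y + sin_mode L (INR (S N)) y).
    rewrite (cos_mode_S L (S N)), (sin_mode_S L (S N)); split; nra.
Qed.

Lemma mode_sum_norm_le L N y : cos_mode L 1 y < 1 ->
  cos_mode_sum L N y ^ 2 + sin_mode_sum L N y ^ 2 <= 2 / (1 - cos_mode L 1 y).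
Proof.
  intros Hc; destruct (mode_sum_geometric L N y) as [H1 H2].
  generalize (cos_mode_sq_add_sin_mode_sq L 1 y) (cos_mode_sq_add_sin_mode_sq L (INR (S N)) y).
  intros E1 E2.
  set (A := cos_mode_sum L N y) in *; set (B := sin_mode_sum L N y) in *.
  set (c := cos_mode L 1 y) in *; set (s := sin_mode L 1 y) in *.
  set (C := cos_mode L (INR (S N)) y) in *.
  assert (Hk : (A ^ 2 + B ^ 2) * (2 - 2 * c) = 2 - 2 * C).
  { replace ((A ^ 2 + B ^ 2) * (2 - 2 * c)) with ((A * (c - 1) - B * s) ^ 2 + (A * s + B * (c - 1)) ^ 2)
      by nra.
    rewrite H1, H2; nra. }
  assert (C >= -1) by nra.
  apply Rmult_le_reg_r with (1 - c); [lra |].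
  unfold Rdiv; rewrite Rmult_assoc, Rinv_l by lra; nra.
Qed.

(** [fejer_sum L N y = sum_(|m| <= N) (N + 1 - |m|) e^(2 pi i m y / L)]. *)
Definition fejer_weight (N m : nat) : R :=
  match m with O => INR N + 1 | S _ => 2 * (INR N + 1 - INR m) end.
Definition fejer_sum (L : R) (N : nat) (y : R) : R :=
  sum_lt (fun m => fejer_weight N m * cos_mode L (INR m) y) (S N).

Lemma mode_sum_cross L N y :
  cos_mode_sum L N y * cos_mode L (INR (S N)) y + sin_mode_sum L N y * sin_mode L (INR (S N)) y
  = sum_lt (fun k => cos_mode L (INR (S k)) y) (S N).
Proof.
  unfold cos_mode_sum, sin_mode_sum; rewrite !sum_lt_mult_r, <- sum_lt_plus.
  rewrite (sum_lt_ext _ (fun k => cos_mode L (INR (S N - k)) y))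
    by (intros; apply cos_mode_diff; lia).
  rewrite sum_lt_rev; apply sum_lt_ext; intros m Hm; do 3 f_equal; lia.
Qed.

Lemma mode_sum_norm_eq L N y : cos_mode_sum L N y ^ 2 + sin_mode_sum L N y ^ 2 = fejer_sum L N y.
Proof.
  induction N.
  - unfold cos_mode_sum, sin_mode_sum, fejer_sum; cbn [sum_lt fejer_weight].
    change (INR 0) with 0; rewrite cos_mode0, sin_mode0; ring.
  - change (cos_mode_sum L (S N) y) with (cos_mode_sum L N y + cos_mode L (INR (S N)) y).
    change (sin_mode_sum L (S N) y) with (sin_mode_sum L N y + sin_mode L (INR (S N)) y).
    replace ((cos_mode_sum L N y + cos_mode L (INR (S N)) y) ^ 2
             + (sin_mode_sum L N y + sin_mode L (INR (S N)) y) ^ 2)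
      with ((cos_mode_sum L N y ^ 2 + sin_mode_sum L N y ^ 2)
            + 2 * (cos_mode_sum L N y * cos_mode L (INR (S N)) y
                   + sin_mode_sum L N y * sin_mode L (INR (S N)) y)
            + (cos_mode L (INR (S N)) y ^ 2 + sin_mode L (INR (S N)) y ^ 2)) by ring.
    rewrite IHN, mode_sum_cross, cos_mode_sq_add_sin_mode_sq.
    unfold fejer_sum; change (sum_lt (fun m => fejer_weight (S N) m * cos_mode L (INR m) y) (S (S N)))
      with (sum_lt (fun m => fejer_weight (S N) m * cos_mode L (INR m) y) (S N)
            + fejer_weight (S N) (S N) * cos_mode L (INR (S N)) y).
    rewrite (sum_lt_ext (fun m => fejer_weight (S N) m * cos_mode L (INR m) y)
               (fun m => fejer_weight N m * cos_mode L (INR m) y + mode_weight m * cos_mode L (INR m) y))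
      by (intros [|m] _; unfold fejer_weight, mode_weight; rewrite ?S_INR; ring).
    rewrite sum_lt_plus, (sum_lt_shift (fun m => mode_weight m * cos_mode L (INR m) y)).
    change (sum_lt (fun k => cos_mode L (INR (S k)) y) (S N))
      with (sum_lt (fun k => cos_mode L (INR (S k)) y) N + cos_mode L (INR (S N)) y).
    replace (sum_lt (fun k => mode_weight (S k) * cos_mode L (INR (S k)) y) N)
      with (2 * sum_lt (fun k => cos_mode L (INR (S k)) y) N) by (rewrite <- sum_lt_scal; reflexivity).
    unfold mode_weight, fejer_weight; change (INR 0) with 0; rewrite cos_mode0, !S_INR; ring.
Qed.

Definition fejer_kernel (L : R) (N : nat) (y : R) : R := fejer_sum L N y / (INR N + 1).

Lemma INR_add1_pos N : 0 < INR N + 1.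
Proof. generalize (pos_INR N); lra. Qed.

Lemma fejer_kernel_ge0 L N y : 0 <= fejer_kernel L N y.
Proof.
  unfold fejer_kernel; rewrite <- mode_sum_norm_eq.
  apply Rdiv_le_0_compat; [| apply INR_add1_pos].
  generalize (pow2_ge_0 (cos_mode_sum L N y)) (pow2_ge_0 (sin_mode_sum L N y)); lra.
Qed.

Lemma fejer_kernel_le L N y c : cos_mode L 1 y <= c -> c < 1 ->
  fejer_kernel L N y <= 2 / ((INR N + 1) * (1 - c)).
Proof.
  intros H1 H2; unfold fejer_kernel; rewrite <- mode_sum_norm_eq.
  pose proof (mode_sum_norm_le L N y ltac:(lra)) as Hb; pose proof (INR_add1_pos N).
  apply Rle_trans with ((2 / (1 - cos_mode L 1 y)) / (INR N + 1)).
  - unfold Rdiv; apply Rmult_le_compat_r; [left; apply Rinv_0_lt_compat; lra | exact Hb].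
  - unfold Rdiv; rewrite Rinv_mult, (Rmult_comm (/ (INR N + 1))), <- Rmult_assoc.
    apply Rmult_le_compat_r; [left; apply Rinv_0_lt_compat; lra |].
    apply Rmult_le_compat_l; [lra | apply Rinv_le_contravar; lra].
Qed.

Lemma continuous_fejer_kernel_shift L N x : continuousR (fun s => fejer_kernel L N (s - x)).
Proof.
  assert (HF : continuousR (fejer_sum L N)).
  { apply (continuous_sum_lt (fun m y => fejer_weight N m * cos_mode L (INR m) y)); intros m y; continuity_tac. }
  intro s; apply (continuous_comp (fun s => s - x) (fejer_kernel L N)); [continuity_tac |].
  unfold fejer_kernel; continuity_tac.
Qed.

(** The Fejer mean [(1/L) int_0^L v(s) K_N(s - x) ds] is a trigonometric polynomial in [x]. *)
Definition fejer_cos_coef (L : R) (v : R -> R) (N m : nat) : R :=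
  fejer_weight N m * cos_coef L v (INR m) / (L * (INR N + 1)).
Definition fejer_sin_coef (L : R) (v : R -> R) (N m : nat) : R :=
  fejer_weight N m * sin_coef L v (INR m) / (L * (INR N + 1)).
Definition fejer_mean (L : R) (v : R -> R) (N : nat) : R -> R :=
  trig_poly L (fejer_cos_coef L v N) (fejer_sin_coef L v N) N.

Lemma RInt_mul_fejer_kernel L v N x : 0 < L -> continuousR v ->
  RInt (fun s => v s * fejer_kernel L N (s - x)) 0 L = L * fejer_mean L v N x :> R.
Proof.
  intros HL Hv; pose proof (INR_add1_pos N).
  set (F := fun m s => fejer_weight N m / (INR N + 1) * cos_mode L (INR m) x
                         * (v s * cos_mode L (INR m) s)
                       + fejer_weight N m / (INR N + 1) * sin_mode L (INR m) x
                         * (v s * sin_mode L (INR m) s)).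
  rewrite (RInt_extR _ (fun s => sum_lt (fun m => F m s) (S N))).
  2:{ intro s; unfold fejer_kernel, fejer_sum, Rdiv at 1.
      rewrite Rmult_comm, !sum_lt_mult_r; apply sum_lt_ext; intros m _.
      unfold F; rewrite cos_mode_sub; field; lra. }
  rewrite RInt_sum_lt by (intro m; unfold F; continuity_R).
  unfold fejer_mean, trig_poly; rewrite <- sum_lt_scal; apply sum_lt_ext; intros m _.
  unfold F; rewrite RInt_plusR, !RInt_scalR by continuity_R.
  unfold trig_term, fejer_cos_coef, fejer_sin_coef, cos_coef, sin_coef; field; lra.
Qed.

Lemma cos_coef_1 L m : 0 < L -> cos_coef L (fun _ => 1) (INR m) = L * kronecker (Z.of_nat m).
Proof.
  intros HL; unfold cos_coef; rewrite <- RInt_cos_mode, <- INR_IZR_INZ by auto.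
  apply RInt_extR; intro; ring.
Qed.
Lemma sin_coef_1 L m : 0 < L -> sin_coef L (fun _ => 1) (INR m) = 0.
Proof.
  intros HL; unfold sin_coef; rewrite INR_IZR_INZ.
  rewrite (RInt_extR _ (sin_mode L (IZR (Z.of_nat m)))) by (intro; ring).
  apply RInt_sin_mode; auto.
Qed.

Lemma RInt_fejer_kernel L N x : 0 < L -> RInt (fun s => fejer_kernel L N (s - x)) 0 L = L :> R.
Proof.
  intros HL; pose proof (INR_add1_pos N).
  rewrite (RInt_extR _ (fun s => (fun _ => 1) s * fejer_kernel L N (s - x))) by (intro; ring).
  rewrite RInt_mul_fejer_kernel by (auto; continuity_R).
  unfold fejer_mean, trig_poly; rewrite sum_lt_shift.
  rewrite (sum_lt_ext _ (fun _ => 0)), sum_lt_zero.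
  - unfold trig_term, fejer_cos_coef, fejer_sin_coef; rewrite cos_coef_1, sin_coef_1 by auto.
    change (INR 0) with 0; change (Z.of_nat 0) with 0%Z.
    rewrite cos_mode0, sin_mode0, kronecker_0; unfold fejer_weight; field; lra.
  - intros m _; unfold trig_term, fejer_cos_coef, fejer_sin_coef.
    rewrite cos_coef_1, sin_coef_1, kronecker_neq by (lia || auto); field; lra.
Qed.
Lemma cos_lt_1 d : 0 < d <= PI -> cos d < 1.
Proof. intros H; rewrite <- cos_0; apply cos_decreasing_1; lra. Qed.

Lemma mode_angle_bounds L d : 0 < L -> 0 < d <= L / 2 -> 0 < 2 * PI * d / L <= PI.
Proof.
  intros HL Hd; pose proof PI_RGT_0; split; [apply Rdiv_lt_0_compat; nra |].
  apply Rmult_le_reg_r with L; auto; unfold Rdiv; rewrite Rmult_assoc, Rinv_l by lra; nra.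
Qed.

Lemma cos_mode_far L d s x : 0 < L -> 0 < d <= L / 2 -> d < Rabs (s - x) < L - d ->
  cos_mode L 1 (s - x) <= cos (2 * PI * d / L).
Proof.
  intros HL Hd H; pose proof PI_RGT_0.
  assert (E : cos_mode L 1 (s - x) = cos (2 * PI * Rabs (s - x) / L)).
  { unfold cos_mode, Rabs; destruct (Rcase_abs (s - x));
      [rewrite <- cos_neg |]; f_equal; unfold Rdiv; ring. }
  rewrite E; set (t := 2 * PI * Rabs (s - x) / L); set (dd := 2 * PI * d / L).
  assert (Hdd : 0 < dd <= PI) by (apply mode_angle_bounds; auto).
  assert (Ht1 : dd < t).
  { unfold dd, t, Rdiv; apply Rmult_lt_compat_r; [apply Rinv_0_lt_compat |]; nra. }
  assert (Ht2 : t < 2 * PI - dd).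
  { unfold dd, t; apply Rmult_lt_reg_r with L; auto; unfold Rdiv.
    replace ((2 * PI - 2 * PI * d * / L) * L) with (2 * PI * (L - d)) by (field; lra).
    rewrite Rmult_assoc, Rinv_l, Rmult_1_r by lra; nra. }
  destruct (Rle_lt_dec t PI).
  - left; apply cos_decreasing_1; lra.
  - replace (cos t) with (cos (2 * PI - t)) by (rewrite cos_minus, cos_2PI, sin_2PI; ring).
    left; apply cos_decreasing_1; lra.
Qed.

(** A bound for the Fejer kernel at distance more than [d] from the diagonal. *)
Definition fejer_tail (L : R) (N : nat) (d : R) : R :=
  2 / ((INR N + 1) * (1 - cos (2 * PI * d / L))).

Lemma fejer_tail_ge0 L N d : 0 < L -> 0 < d <= L / 2 -> 0 <= fejer_tail L N d.
Proof.
  intros HL Hd; pose proof (INR_add1_pos N).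
  pose proof (cos_lt_1 _ (mode_angle_bounds L d HL Hd)).
  apply Rdiv_le_0_compat; [lra | apply Rmult_lt_0_compat; lra].
Qed.

Section FejerApproximation.

Variables (L : R) (u : R -> R) (M U : R).
Hypothesis HL : 0 < L.
Hypothesis HM : 0 <= M.
Hypothesis Hu : continuousR u.
Hypothesis Hper : forall t, u (t + L) = u t.
Hypothesis Hlip : forall a b, -L <= a <= 2 * L -> -L <= b <= 2 * L ->
  Rabs (u a - u b) <= M * Rabs (a - b).
Hypothesis HU : forall t, 0 <= t <= L -> Rabs (u t) <= U.

(** Near the diagonal (modulo [L]) use the Lipschitz bound, away from it the kernel bound. *)
Lemma fejer_integrand_bound N d s x : 0 < d <= L / 2 -> 0 <= s <= L -> 0 <= x <= L ->
  Rabs ((u s - u x) * fejer_kernel L N (s - x))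
  <= M * d * fejer_kernel L N (s - x) + 2 * U * fejer_tail L N d.
Proof.
  intros Hd Hs Hx.
  pose proof (fejer_kernel_ge0 L N (s - x)) as HK; pose proof (fejer_tail_ge0 L N d HL Hd) as HG.
  assert (HU0 : 0 <= U) by (generalize (HU 0 ltac:(lra)) (Rabs_pos (u 0)); lra).
  rewrite Rabs_mult, (Rabs_pos_eq (fejer_kernel L N (s - x))) by auto.
  assert (Hnear : Rabs (u s - u x) <= M * d ->
    Rabs (u s - u x) * fejer_kernel L N (s - x)
    <= M * d * fejer_kernel L N (s - x) + 2 * U * fejer_tail L N d).
  { intros H; generalize (Rmult_le_compat_r _ _ _ HK H) (Rmult_le_pos _ _ (Rmult_le_pos 2 U ltac:(lra) HU0) HG).
    lra. }
  destruct (Rle_lt_dec (Rabs (s - x)) d) as [H1|H1].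
  { apply Hnear, Rle_trans with (M * Rabs (s - x)); [apply Hlip; lra | apply Rmult_le_compat_l; lra]. }
  destruct (Rle_lt_dec (L - d) (Rabs (s - x))) as [H2|H2].
  { apply Hnear; unfold Rabs in H2; destruct (Rcase_abs (s - x)).
    - rewrite <- (Hper s); apply Rle_trans with (M * Rabs (s + L - x)); [apply Hlip; lra |].
      apply Rmult_le_compat_l; auto; unfold Rabs; destruct (Rcase_abs (s + L - x)); lra.
    - replace (u s) with (u (s - L)) by (rewrite <- (Hper (s - L)); f_equal; ring).
      apply Rle_trans with (M * Rabs (s - L - x)); [apply Hlip; lra |].
      apply Rmult_le_compat_l; auto; unfold Rabs; destruct (Rcase_abs (s - L - x)); lra. }
  assert (HKb : fejer_kernel L N (s - x) <= fejer_tail L N d).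
  { apply fejer_kernel_le; [apply cos_mode_far; auto; lra |].
    apply cos_lt_1, mode_angle_bounds; auto. }
  assert (Hd2 : Rabs (u s - u x) <= 2 * U).
  { unfold Rminus; eapply Rle_trans; [apply Rabs_triang |].
    rewrite Rabs_Ropp; generalize (HU s Hs) (HU x Hx); lra. }
  generalize (Rmult_le_pos _ _ (Rmult_le_pos M d HM ltac:(lra)) HK).
  assert (Rabs (u s - u x) * fejer_kernel L N (s - x) <= 2 * U * fejer_tail L N d)
    by (apply Rmult_le_compat; auto; apply Rabs_pos).
  lra.
Qed.

(** The kernel has integral [L], so [L (fejer_mean - u x)] is the integral of
    [(u s - u x) K_N (s - x)]. *)
Lemma fejer_mean_error N d x : 0 < d <= L / 2 -> 0 <= x <= L ->
  Rabs (u x - fejer_mean L u N x) <= M * d + 2 * U * fejer_tail L N d.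
Proof.
  intros Hd Hx; pose proof (continuous_fejer_kernel_shift L N x) as HKc.
  assert (E : L * (fejer_mean L u N x - u x)
              = RInt (fun s => (u s - u x) * fejer_kernel L N (s - x)) 0 L).
  { rewrite Rmult_minus_distr_l, <- RInt_mul_fejer_kernel by auto.
    rewrite (RInt_extR (fun s => (u s - u x) * fejer_kernel L N (s - x))
               (fun s => u s * fejer_kernel L N (s - x) - u x * fejer_kernel L N (s - x)))
      by (intro; ring).
    rewrite RInt_minusR by continuity_R; rewrite RInt_scalR, RInt_fejer_kernel by auto; ring. }
  apply Rmult_le_reg_l with L; auto.
  rewrite <- (Rabs_pos_eq L) at 1 by lra; rewrite <- Rabs_mult, <- Rabs_Ropp.
  replace (- (L * (u x - fejer_mean L u N x))) with (L * (fejer_mean L u N x - u x)) by ring.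
  rewrite E; eapply Rle_trans; [apply abs_RInt_leR; [lra | continuity_R] |].
  eapply Rle_trans.
  { apply (RInt_leR _ (fun s => M * d * fejer_kernel L N (s - x) + 2 * U * fejer_tail L N d));
      [lra | continuity_R | continuity_R |].
    intros s Hs; apply fejer_integrand_bound; auto. }
  rewrite RInt_plusR, RInt_scalR, RInt_fejer_kernel, RInt_constR by (auto; continuity_R); lra.
Qed.

Lemma fejer_mean_uniform eta : 0 < eta ->
  exists N0, forall N, (N0 <= N)%nat -> forall x, 0 <= x <= L ->
  Rabs (u x - fejer_mean L u N x) <= eta.
Proof.
  intros Heta.
  assert (HU0 : 0 <= U) by (generalize (HU 0 ltac:(lra)) (Rabs_pos (u 0)); lra).
  set (d := Rmin (L / 2) (eta / (2 * (M + 1)))).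
  assert (Hd : 0 < d <= L / 2).
  { unfold d; split; [apply Rmin_glb_lt; [lra | apply Rdiv_lt_0_compat; lra] | apply Rmin_l]. }
  assert (HMd : M * d < eta / 2).
  { apply Rle_lt_trans with (M * (eta / (2 * (M + 1)))); [apply Rmult_le_compat_l; auto; apply Rmin_r |].
    apply Rmult_lt_reg_r with (2 * (M + 1)); [lra |]; unfold Rdiv; field_simplify; [nra | lra]. }
  set (cd := cos (2 * PI * d / L)).
  assert (Hcd : 0 < 1 - cd) by (pose proof (cos_lt_1 _ (mode_angle_bounds L d HL Hd)); unfold cd; lra).
  destruct (INR_unbounded (8 * U / (eta * (1 - cd)))) as [N0 HN0].
  exists N0; intros N HN x Hx.
  eapply Rle_trans; [apply (fejer_mean_error N d x); auto |].
  assert (2 * U * fejer_tail L N d <= eta / 2); [|lra].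
  apply le_INR in HN; pose proof (INR_add1_pos N).
  assert (HX : 8 * U <= (INR N + 1) * (eta * (1 - cd))).
  { apply Rmult_le_reg_r with (/ (eta * (1 - cd))); [apply Rinv_0_lt_compat; nra |].
    replace ((INR N + 1) * (eta * (1 - cd)) * / (eta * (1 - cd))) with (INR N + 1) by (field; nra).
    unfold Rdiv in HN0; lra. }
  unfold fejer_tail; fold cd.
  apply Rmult_le_reg_r with ((INR N + 1) * (1 - cd)); [nra |].
  unfold Rdiv; replace (2 * U * (2 * / ((INR N + 1) * (1 - cd))) * ((INR N + 1) * (1 - cd)))
    with (4 * U) by (field; nra).
  nra.
Qed.

End FejerApproximation.

Lemma bounded_on_segment (f : R -> R) a b : a <= b -> continuousR f ->
  exists M, 0 <= M /\ forall t, a <= t <= b -> Rabs (f t) <= M.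
Proof.
  intros Hab Hf; destruct (continuity_ab_maj (fun t => Rabs (f t)) a b Hab) as [Mx [HM _]].
  { intros c _; apply continuity_pt_of_continuous; continuity_tac. }
  exists (Rabs (f Mx)); split; [apply Rabs_pos | auto].
Qed.

Lemma lipschitz_on_segment (u du : R -> R) a b : a <= b ->
  (forall x, derivable_pt_lim u x (du x)) -> continuousR du ->
  exists M, 0 <= M /\ forall x y, a <= x <= b -> a <= y <= b -> Rabs (u x - u y) <= M * Rabs (x - y).
Proof.
  intros Hab Hd Hdu; destruct (bounded_on_segment du a b Hab Hdu) as [M [HM0 HM]].
  exists M; split; auto; intros x y Hx Hy.
  destruct (MVT_abs u du y x) as [c [-> Hc]]; [intros; apply Hd |].
  apply Rmult_le_compat_r; [apply Rabs_pos |]; apply HM; split.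
  - apply Rle_trans with (Rmin y x); [apply Rmin_glb |]; lra.
  - apply Rle_trans with (Rmax y x); [| apply Rmax_lub]; lra.
Qed.

Theorem parseval L u du : 0 < L ->
  (forall x, derivable_pt_lim u x (du x)) -> continuousR du -> (forall t, u (t + L) = u t) ->
  Un_cv (bessel_sum L u) (L * RInt (fun x => u x ^ 2) 0 L).
Proof.
  intros HL Hd Hdu Hper.
  assert (Hu : continuousR u) by (apply continuousR_of_derive with du; auto).
  destruct (lipschitz_on_segment u du (- L) (2 * L) ltac:(lra) Hd Hdu) as [M [HM0 Hlip]].
  destruct (bounded_on_segment u 0 L ltac:(lra) Hu) as [U [_ HU]].
  intros eps Heps; set (eta := sqrt eps / (2 * L)).
  assert (Hs : sqrt eps * sqrt eps = eps) by (apply sqrt_sqrt; lra).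
  assert (Heta : 0 < eta) by (apply Rdiv_lt_0_compat; [apply sqrt_lt_R0 |]; lra).
  destruct (fejer_mean_uniform L u M U HL HM0 Hu Hper Hlip HU eta Heta) as [N0 HN0].
  exists N0; intros N HN; unfold R_dist.
  set (P := fejer_mean L u N).
  assert (Hint : RInt (fun x => (u x - P x) ^ 2) 0 L <= L * eta ^ 2).
  { replace (L * eta ^ 2) with ((L - 0) * eta ^ 2) by ring; rewrite <- RInt_constR.
    apply RInt_leR; [lra | pose proof (continuous_trig_poly L (fejer_cos_coef L u N) (fejer_sin_coef L u N) N);
                          unfold P, fejer_mean; continuity_R | continuity_R |].
    intros x Hx; pose proof (HN0 N HN x Hx) as Hb; fold P in Hb.
    rewrite <- (Rabs_pos_eq eta) in Hb by lra; apply Rsqr_le_abs_1 in Hb; unfold Rsqr in Hb; nra. }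
  pose proof (bessel_defect_le L u (fejer_cos_coef L u N) (fejer_sin_coef L u N) N HL Hu) as Hdef.
  pose proof (bessel_inequality L u N HL Hu).
  change (trig_poly L (fejer_cos_coef L u N) (fejer_sin_coef L u N) N) with P in Hdef.
  rewrite Rabs_minus_sym, Rabs_pos_eq by lra.
  assert (L * (L * eta ^ 2) = eps / 4) by (unfold eta; field_simplify; [rewrite pow2_sqrt; lra | lra]).
  nra.
Qed.
Lemma derivable_pt_lim_ext (f g : R -> R) x l :
  (forall t, f t = g t) -> derivable_pt_lim f x l -> derivable_pt_lim g x l.
Proof. intros H Hf; apply is_derive_Reals, (is_derive_ext f g); auto; apply is_derive_Reals; auto. Qed.

Lemma derivable_pt_lim_shift (f : R -> R) c x l :
  derivable_pt_lim f (x + c) l -> derivable_pt_lim (fun s => f (s + c)) x l.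
Proof.
  intro H; assert (Hs : derivable_pt_lim (fun s => s + c) x 1)
    by (apply is_derive_Reals; auto_derive; auto).
  generalize (derivable_pt_lim_comp (fun s => s + c) f x 1 l Hs H); rewrite Rmult_1_r; auto.
Qed.

Lemma derivable_pt_lim_plus_fun (f g : R -> R) x df dg :
  derivable_pt_lim f x df -> derivable_pt_lim g x dg ->
  derivable_pt_lim (fun s => f s + g s) x (df + dg).
Proof. intros; apply (derivable_pt_lim_ext (f + g)%F); [reflexivity | apply derivable_pt_lim_plus; auto]. Qed.
Lemma derivable_pt_lim_mult_fun (f g : R -> R) x df dg :
  derivable_pt_lim f x df -> derivable_pt_lim g x dg ->
  derivable_pt_lim (fun s => f s * g s) x (df * g x + f x * dg).
Proof. intros; apply (derivable_pt_lim_ext (f * g)%F); [reflexivity | apply derivable_pt_lim_mult; auto]. Qed.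
Lemma derivable_pt_lim_lin (f g : R -> R) df dg a x :
  derivable_pt_lim f x df -> derivable_pt_lim g x dg ->
  derivable_pt_lim (fun s => f s + a * g s) x (df + a * dg).
Proof.
  intros Hf Hg; apply derivable_pt_lim_plus_fun; auto.
  apply (derivable_pt_lim_ext (mult_real_fct a g)); [reflexivity | apply derivable_pt_lim_scal; auto].
Qed.

Lemma deriv_tower_continuous (D : nat -> R -> R) : deriv_tower D -> forall k, continuousR (D k).
Proof. intros HD k; apply continuousR_of_derive with (D (S k)); intro; apply HD. Qed.

Lemma deriv_tower_periodic (D : nat -> R -> R) L : deriv_tower D ->
  (forall s, D 0%nat (s + L) = D 0%nat s) -> forall k s, D k (s + L) = D k s.
Proof.
  intros HD H0 k; induction k; auto; intro x.
  apply (uniqueness_limite (fun s => D k (s + L)) x).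
  - apply derivable_pt_lim_shift, HD.
  - apply (derivable_pt_lim_ext (D k)); [intro; symmetry; auto | apply HD].
Qed.

(** Integration by parts: the boundary terms cancel by periodicity. *)
Lemma cos_coef_derive L u du z : 0 < L ->
  (forall x, derivable_pt_lim u x (du x)) -> continuousR du -> (forall t, u (t + L) = u t) ->
  cos_coef L du (IZR z) = 2 * PI * IZR z / L * sin_coef L u (IZR z).
Proof.
  intros HL Hd Hdu Hper; assert (Hu : continuousR u) by (apply continuousR_of_derive with du; auto).
  assert (HuL : u L = u 0) by (rewrite <- (Hper 0); f_equal; ring).
  unfold cos_coef, sin_coef; rewrite <- RInt_scalR by continuity_R.
  apply Rminus_diag_uniq; rewrite <- RInt_minusR by continuity_R.
  rewrite (RInt_derive (fun s => u s * cos_mode L (IZR z) s)).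
  - unfold cos_mode; replace (2 * PI * IZR z * L / L) with (2 * PI * IZR z) by (field; lra).
    replace (2 * PI * IZR z * 0 / L) with 0 by (field; lra).
    rewrite cos_2PI_mult_IZR, HuL, cos_0; ring.
  - intro x; unfold cos_mode, sin_mode.
    replace (du x * cos (2 * PI * IZR z * x / L) - 2 * PI * IZR z / L * (u x * sin (2 * PI * IZR z * x / L)))
      with (du x * cos (2 * PI * IZR z * x / L) + u x * (- sin (2 * PI * IZR z * x / L) * (2 * PI * IZR z / L)))
      by ring.
    apply (is_derive_mult u (fun s => cos (2 * PI * IZR z * s / L))); [apply is_derive_Reals; auto | |].
    + auto_derive; auto; real_eq; unfold Rdiv; ring.
    + intros; apply Rmult_comm.
  - continuity_R.
Qed.

Lemma sin_coef_derive L u du z : 0 < L ->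
  (forall x, derivable_pt_lim u x (du x)) -> continuousR du -> (forall t, u (t + L) = u t) ->
  sin_coef L du (IZR z) = - (2 * PI * IZR z / L) * cos_coef L u (IZR z).
Proof.
  intros HL Hd Hdu Hper; assert (Hu : continuousR u) by (apply continuousR_of_derive with du; auto).
  assert (HuL : u L = u 0) by (rewrite <- (Hper 0); f_equal; ring).
  unfold cos_coef, sin_coef; rewrite <- RInt_scalR by continuity_R.
  apply Rminus_diag_uniq; rewrite <- RInt_minusR by continuity_R.
  rewrite (RInt_derive (fun s => u s * sin_mode L (IZR z) s)).
  - unfold sin_mode; replace (2 * PI * IZR z * L / L) with (2 * PI * IZR z) by (field; lra).
    replace (2 * PI * IZR z * 0 / L) with 0 by (field; lra).
    rewrite sin_2PI_mult_IZR, sin_0; ring.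
  - intro x; unfold cos_mode, sin_mode.
    replace (du x * sin (2 * PI * IZR z * x / L) - - (2 * PI * IZR z / L) * (u x * cos (2 * PI * IZR z * x / L)))
      with (du x * sin (2 * PI * IZR z * x / L) + u x * (cos (2 * PI * IZR z * x / L) * (2 * PI * IZR z / L)))
      by ring.
    apply (is_derive_mult u (fun s => sin (2 * PI * IZR z * s / L))); [apply is_derive_Reals; auto | |].
    + auto_derive; auto; real_eq; unfold Rdiv; ring.
    + intros; apply Rmult_comm.
  - continuity_R.
Qed.

Lemma cos_coef_lin L f g a r : continuousR f -> continuousR g ->
  cos_coef L (fun s => f s + a * g s) r = cos_coef L f r + a * cos_coef L g r.
Proof.
  intros; unfold cos_coef; rewrite <- RInt_scalR, <- RInt_plusR by continuity_R.
  apply RInt_extR; intro; ring.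
Qed.
Lemma sin_coef_lin L f g a r : continuousR f -> continuousR g ->
  sin_coef L (fun s => f s + a * g s) r = sin_coef L f r + a * sin_coef L g r.
Proof.
  intros; unfold sin_coef; rewrite <- RInt_scalR, <- RInt_plusR by continuity_R.
  apply RInt_extR; intro; ring.
Qed.

Lemma cos_coef_opp L u r : cos_coef L u (- r) = cos_coef L u r.
Proof.
  unfold cos_coef, cos_mode; apply RInt_extR; intro s; f_equal.
  rewrite <- cos_neg; f_equal; unfold Rdiv; ring.
Qed.
Lemma sin_coef_opp L u r : continuousR u -> sin_coef L u (- r) = - sin_coef L u r.
Proof.
  intros Hu; unfold sin_coef.
  replace (- RInt (fun s => u s * sin_mode L r s) 0 L)
    with (-1 * RInt (fun s => u s * sin_mode L r s) 0 L) by ring.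
  rewrite <- RInt_scalR by continuity_R.
  apply RInt_extR; intro s; unfold sin_mode.
  replace (2 * PI * - r * s / L) with (- (2 * PI * r * s / L)) by (unfold Rdiv; ring).
  rewrite sin_neg; ring.
Qed.

(** [L |fhat k|^2] for [f = f1 + i f2], in terms of the real coefficients. *)
Definition coef_norm2 (L : R) (f1 f2 : R -> R) (z : Z) : R :=
  (cos_coef L f1 (IZR z) + sin_coef L f2 (IZR z)) ^ 2
  + (cos_coef L f2 (IZR z) - sin_coef L f1 (IZR z)) ^ 2.

Lemma fhat_norm2_eq L f1 f2 z : 0 < L -> continuousR f1 -> continuousR f2 ->
  fhat_norm2 f1 f2 L z = coef_norm2 L f1 f2 z / L.
Proof.
  intros HL C1 C2; unfold fhat_norm2, fhat_re, fhat_im.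
  rewrite !Rint_RInt by (lra || continuity_R).
  rewrite (RInt_plusR (fun s => f1 s * cos (2 * PI * IZR z * s / L))
                      (fun s => f2 s * sin (2 * PI * IZR z * s / L))) by continuity_R.
  rewrite (RInt_minusR (fun s => f2 s * cos (2 * PI * IZR z * s / L))
                       (fun s => f1 s * sin (2 * PI * IZR z * s / L))) by continuity_R.
  unfold coef_norm2, cos_coef, sin_coef, cos_mode, sin_mode.
  rewrite !Rpow_mult_distr, pow_inv, pow2_sqrt by lra; unfold Rdiv; ring.
Qed.

(** [sum_sym a N = sum_(|k| <= N) a k], grouping [k] with [-k]. *)
Definition sum_sym (a : Z -> R) (N : nat) : R :=
  a 0%Z + sum_lt (fun m => a (Z.of_nat (S m)) + a (- Z.of_nat (S m))%Z) N.

Lemma sum_f_R0_sum_lt f n : sum_f_R0 f n = sum_lt f (S n).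
Proof. induction n; simpl; [ring | rewrite IHn; simpl; ring]. Qed.

Lemma sumZ_partial_sum_sym a N : sumZ_partial a N = sum_sym a N.
Proof.
  unfold sumZ_partial; rewrite sum_f_R0_sum_lt; induction N.
  - unfold sum_sym; simpl; ring.
  - replace (2 * S N)%nat with (S (S (2 * N))) by lia.
    rewrite sum_lt_shift.
    change (sum_lt (fun k => a (Z.of_nat (S k) - Z.of_nat (S N))%Z) (S (S (2 * N))))
      with (sum_lt (fun k => a (Z.of_nat (S k) - Z.of_nat (S N))%Z) (S (2 * N))
            + a (Z.of_nat (S (S (2 * N))) - Z.of_nat (S N))%Z).
    rewrite (sum_lt_ext _ (fun j => a (Z.of_nat j - Z.of_nat N)%Z)) by (intros; f_equal; lia).
    rewrite IHN; unfold sum_sym; change (sum_lt ?f (S N)) with (sum_lt f N + f N).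
    replace (Z.of_nat 0 - Z.of_nat (S N))%Z with (- Z.of_nat (S N))%Z by lia.
    replace (Z.of_nat (S (S (2 * N))) - Z.of_nat (S N))%Z with (Z.of_nat (S N)) by lia.
    ring.
Qed.

Lemma sum_sym_ext a b N : (forall z, a z = b z) -> sum_sym a N = sum_sym b N.
Proof. intros H; unfold sum_sym; rewrite H; f_equal; apply sum_lt_ext; intros; rewrite !H; auto. Qed.
Lemma sum_sym_plus a b N : sum_sym (fun z => a z + b z) N = sum_sym a N + sum_sym b N.
Proof.
  unfold sum_sym; rewrite (sum_lt_ext _ (fun m => (a (Z.of_nat (S m)) + a (- Z.of_nat (S m))%Z)
                                                  + (b (Z.of_nat (S m)) + b (- Z.of_nat (S m))%Z)))
    by (intros; ring).
  rewrite sum_lt_plus; ring.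
Qed.
Lemma sum_sym_scal c a N : sum_sym (fun z => c * a z) N = c * sum_sym a N.
Proof.
  unfold sum_sym; rewrite (sum_lt_ext _ (fun m => c * (a (Z.of_nat (S m)) + a (- Z.of_nat (S m))%Z)))
    by (intros; ring).
  rewrite sum_lt_scal; ring.
Qed.

Lemma sum_sym_coef_norm2 L f1 f2 N : continuousR f1 -> continuousR f2 ->
  sum_sym (coef_norm2 L f1 f2) N = bessel_sum L f1 N + bessel_sum L f2 N.
Proof.
  intros H1 H2; unfold sum_sym, bessel_sum; rewrite !sum_lt_shift.
  assert (Hs : sum_lt (fun m => coef_norm2 L f1 f2 (Z.of_nat (S m)) + coef_norm2 L f1 f2 (- Z.of_nat (S m))%Z) N
    = sum_lt (fun k => mode_weight (S k) * (cos_coef L f1 (INR (S k)) ^ 2 + sin_coef L f1 (INR (S k)) ^ 2)) N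
    + sum_lt (fun k => mode_weight (S k) * (cos_coef L f2 (INR (S k)) ^ 2 + sin_coef L f2 (INR (S k)) ^ 2)) N).
  { rewrite <- sum_lt_plus; apply sum_lt_ext; intros m _; unfold coef_norm2, mode_weight.
    rewrite opp_IZR, !cos_coef_opp, !sin_coef_opp, <- INR_IZR_INZ by auto; ring. }
  rewrite Hs; unfold coef_norm2; change (IZR 0) with 0; change (INR 0) with 0.
  rewrite !sin_coef_0; unfold mode_weight; ring.
Qed.
Lemma Un_cv_ext (u v : nat -> R) l : (forall N, u N = v N) -> Un_cv u l -> Un_cv v l.
Proof. intros E H eps He; destruct (H eps He) as [N0 HN]; exists N0; intros; rewrite <- E; auto. Qed.

Lemma Un_cv_const c : Un_cv (fun _ => c) c.
Proof. intros eps He; exists O; intros; unfold R_dist; rewrite Rminus_diag, Rabs_R0; auto. Qed.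

Section ClosedCurve.

Variables (D1 D2 : nat -> R -> R) (L : R).
Hypothesis Hcurve : arclength_closed_curve D1 D2 L.

Lemma curve_length_pos : 0 < L.
Proof. apply Hcurve. Qed.
Lemma curve_unit_speed s : D1 1%nat s ^ 2 + D2 1%nat s ^ 2 = 1.
Proof. apply Hcurve. Qed.
Lemma curve_tower1 : deriv_tower D1.
Proof. apply Hcurve. Qed.
Lemma curve_tower2 : deriv_tower D2.
Proof. apply Hcurve. Qed.
Lemma curve_continuous1 : forall k, continuousR (D1 k).
Proof. apply deriv_tower_continuous, curve_tower1. Qed.
Lemma curve_continuous2 : forall k, continuousR (D2 k).
Proof. apply deriv_tower_continuous, curve_tower2. Qed.
Lemma curve_periodic1 k s : D1 k (s + L) = D1 k s.
Proof. apply deriv_tower_periodic; [apply curve_tower1 | apply Hcurve]. Qed.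
Lemma curve_periodic2 k s : D2 k (s + L) = D2 k s.
Proof. apply deriv_tower_periodic; [apply curve_tower2 | apply Hcurve]. Qed.

Lemma continuous_curvature : continuousR (curvature D1 D2).
Proof. pose proof curve_continuous1; pose proof curve_continuous2; unfold curvature; continuity_R. Qed.

Lemma curvature_periodic t : curvature D1 D2 (t + L) = curvature D1 D2 t.
Proof. unfold curvature; rewrite !curve_periodic1, !curve_periodic2; reflexivity. Qed.

(** Differentiating [|f'|^2 = 1]. *)
Lemma tangent_orthogonal_acceleration s :
  D1 1%nat s * D1 2%nat s + D2 1%nat s * D2 2%nat s = 0.
Proof.
  pose proof curve_tower1 as H1; pose proof curve_tower2 as H2.
  assert (A : derivable_pt_lim (fun x => D1 1%nat x * D1 1%nat x + D2 1%nat x * D2 1%nat x) s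
     ((D1 2%nat s * D1 1%nat s + D1 1%nat s * D1 2%nat s)
      + (D2 2%nat s * D2 1%nat s + D2 1%nat s * D2 2%nat s)))
    by (apply derivable_pt_lim_plus_fun; apply derivable_pt_lim_mult_fun; auto).
  assert (B : derivable_pt_lim (fun x => D1 1%nat x * D1 1%nat x + D2 1%nat x * D2 1%nat x) s 0).
  { apply (derivable_pt_lim_ext (fun _ => 1)); [| apply derivable_pt_lim_const].
    intro t; rewrite <- (curve_unit_speed t); ring. }
  generalize (uniqueness_limite _ _ _ _ A B); lra.
Qed.

(** Frenet: [f'' = kappa nu]. *)
Lemma acceleration_curvature s :
  D1 2%nat s = - curvature D1 D2 s * D2 1%nat s /\ D2 2%nat s = curvature D1 D2 s * D1 1%nat s.
Proof.
  pose proof (tangent_orthogonal_acceleration s) as E; pose proof (curve_unit_speed s) as U.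
  unfold curvature; split.
  - transitivity (D1 2%nat s * (D1 1%nat s ^ 2 + D2 1%nat s ^ 2)
                  - D1 1%nat s * (D1 1%nat s * D1 2%nat s + D2 1%nat s * D2 2%nat s)); [rewrite U, E |]; ring.
  - transitivity (D2 2%nat s * (D1 1%nat s ^ 2 + D2 1%nat s ^ 2)
                  - D2 1%nat s * (D1 1%nat s * D1 2%nat s + D2 1%nat s * D2 2%nat s)); [rewrite U, E |]; ring.
Qed.

Lemma twisted_acceleration_norm2 a s :
  (D1 2%nat s + a * D2 1%nat s) ^ 2 + (D2 2%nat s + - a * D1 1%nat s) ^ 2 = (curvature D1 D2 s - a) ^ 2.
Proof.
  destruct (acceleration_curvature s) as [-> ->].
  replace ((curvature D1 D2 s - a) ^ 2)
    with ((curvature D1 D2 s - a) ^ 2 * (D1 1%nat s ^ 2 + D2 1%nat s ^ 2))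
    by (rewrite curve_unit_speed; ring).
  ring.
Qed.

Lemma coef_norm2_tangent z :
  coef_norm2 L (D1 1%nat) (D2 1%nat) z = (2 * PI * IZR z / L) ^ 2 * coef_norm2 L (D1 0%nat) (D2 0%nat) z.
Proof.
  pose proof curve_length_pos as HL; pose proof curve_continuous1; pose proof curve_continuous2.
  unfold coef_norm2.
  rewrite !(cos_coef_derive L (D1 0%nat) (D1 1%nat)), !(sin_coef_derive L (D1 0%nat) (D1 1%nat)),
    !(cos_coef_derive L (D2 0%nat) (D2 1%nat)), !(sin_coef_derive L (D2 0%nat) (D2 1%nat));
    auto using curve_tower1, curve_tower2, curve_periodic1, curve_periodic2.
  ring.
Qed.

(** The Fourier coefficients of [f'' - i a f'] are [(2 pi i k/L)(2 pi i k/L - i a) fhat k]. *)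
Lemma coef_norm2_twisted a z :
  coef_norm2 L (fun s => D1 2%nat s + a * D2 1%nat s) (fun s => D2 2%nat s + - a * D1 1%nat s) z
  = (2 * PI * IZR z / L * (a - 2 * PI * IZR z / L)) ^ 2 * coef_norm2 L (D1 0%nat) (D2 0%nat) z.
Proof.
  pose proof curve_length_pos as HL; pose proof curve_continuous1 as C1; pose proof curve_continuous2 as C2.
  unfold coef_norm2; rewrite !cos_coef_lin, !sin_coef_lin by auto.
  rewrite !(cos_coef_derive L (D1 1%nat) (D1 2%nat)), !(sin_coef_derive L (D1 1%nat) (D1 2%nat)),
    !(cos_coef_derive L (D2 1%nat) (D2 2%nat)), !(sin_coef_derive L (D2 1%nat) (D2 2%nat)),
    !(cos_coef_derive L (D1 0%nat) (D1 1%nat)), !(sin_coef_derive L (D1 0%nat) (D1 1%nat)),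
    !(cos_coef_derive L (D2 0%nat) (D2 1%nat)), !(sin_coef_derive L (D2 0%nat) (D2 1%nat));
    auto using curve_tower1, curve_tower2, curve_periodic1, curve_periodic2.
  ring.
Qed.

Lemma parseval_twisted a :
  Un_cv (fun N => bessel_sum L (fun s => D1 2%nat s + a * D2 1%nat s) N
                  + bessel_sum L (fun s => D2 2%nat s + - a * D1 1%nat s) N)
        (L * RInt (fun s => (curvature D1 D2 s - a) ^ 2) 0 L).
Proof.
  pose proof curve_length_pos as HL; pose proof curve_continuous1 as C1; pose proof curve_continuous2 as C2.
  replace (L * RInt (fun s => (curvature D1 D2 s - a) ^ 2) 0 L)
    with (L * RInt (fun s => (D1 2%nat s + a * D2 1%nat s) ^ 2) 0 L
          + L * RInt (fun s => (D2 2%nat s + - a * D1 1%nat s) ^ 2) 0 L).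
  - pose proof curve_tower1 as H1; pose proof curve_tower2 as H2.
    apply CV_plus.
    + apply (parseval L _ (fun s => D1 3%nat s + a * D2 2%nat s)); auto;
        [intro; apply derivable_pt_lim_lin; auto | continuity_R |].
      intro; rewrite !curve_periodic1, !curve_periodic2; reflexivity.
    + apply (parseval L _ (fun s => D2 3%nat s + - a * D1 2%nat s)); auto;
        [intro; apply derivable_pt_lim_lin; auto | continuity_R |].
      intro; rewrite !curve_periodic1, !curve_periodic2; reflexivity.
  - rewrite <- Rmult_plus_distr_l, <- RInt_plusR by continuity_R.
    f_equal; apply RInt_extR; intro s; apply twisted_acceleration_norm2.
Qed.

Lemma parseval_tangent :
  Un_cv (fun N => bessel_sum L (D1 1%nat) N + bessel_sum L (D2 1%nat) N) (L * L).
Proof.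
  pose proof curve_length_pos as HL; pose proof curve_continuous1 as C1; pose proof curve_continuous2 as C2.
  replace (L * L) with (L * RInt (fun s => D1 1%nat s ^ 2) 0 L + L * RInt (fun s => D2 1%nat s ^ 2) 0 L).
  - apply CV_plus; [apply (parseval L _ (D1 2%nat)) | apply (parseval L _ (D2 2%nat))];
      auto using curve_tower1, curve_tower2, curve_periodic1, curve_periodic2.
  - rewrite <- Rmult_plus_distr_l, <- RInt_plusR by continuity_R.
    rewrite (RInt_extR _ (fun _ => 1)) by apply curve_unit_speed.
    rewrite RInt_constR; ring.
Qed.

Variable n : Z.
Hypothesis Hrot : rotation_number D1 D2 L = IZR n.

Lemma RInt_curvature : RInt (curvature D1 D2) 0 L = 2 * PI * IZR n :> R.
Proof.
  pose proof curve_length_pos as HL; pose proof PI_RGT_0.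
  unfold rotation_number in Hrot; rewrite Rint_RInt in Hrot by (lra || apply continuous_curvature).
  rewrite <- Hrot, <- Rmult_assoc, Rinv_r, Rmult_1_l by lra; reflexivity.
Qed.

Lemma I0_eq_centered :
  I0 D1 D2 L = L * RInt (fun s => (curvature D1 D2 s - 2 * PI * IZR n / L) ^ 2) 0 L.
Proof.
  pose proof curve_length_pos as HL; pose proof continuous_curvature.
  unfold I0; rewrite !Rint_RInt by (lra || continuity_R).
  rewrite RInt_curvature; f_equal; apply RInt_extR; intro s; f_equal; field; lra.
Qed.

Lemma I0_nonneg : 0 <= I0 D1 D2 L.
Proof.
  pose proof curve_length_pos as HL; pose proof continuous_curvature.
  rewrite I0_eq_centered; apply Rmult_le_pos; [lra |].
  apply RInt_ge0; [lra | continuity_R | intros; apply pow2_ge_0].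
Qed.

Lemma I0_series_sq :
  Un_cv (fun N => 16 * PI ^ 4 / L ^ 3 *
           sumZ_partial (fun k => IZR k ^ 2 * (IZR k - IZR n) ^ 2
                                  * fhat_norm2 (D1 0%nat) (D2 0%nat) L k) N)
        (I0 D1 D2 L).
Proof.
  pose proof curve_length_pos as HL; pose proof curve_continuous1 as C1; pose proof curve_continuous2 as C2.
  rewrite I0_eq_centered; apply Un_cv_ext with (2 := parseval_twisted (2 * PI * IZR n / L)).
  intro N; rewrite sumZ_partial_sum_sym, <- sum_sym_scal, <- sum_sym_coef_norm2 by continuity_R.
  apply sum_sym_ext; intro z; rewrite coef_norm2_twisted, fhat_norm2_eq by auto.
  field; lra.
Qed.

(** [k^3 (k - n) = k^2 (k - n/2)^2 - (n/2)^2 k^2], and [L int (kappa - w/2)^2 - (w/2)^2 L^2 = I0]. *)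
Lemma I0_series_cubic :
  Un_cv (fun N => 16 * PI ^ 4 / L ^ 3 *
           sumZ_partial (fun k => IZR k ^ 3 * (IZR k - IZR n)
                                  * fhat_norm2 (D1 0%nat) (D2 0%nat) L k) N)
        (I0 D1 D2 L).
Proof.
  pose proof curve_length_pos as HL; pose proof curve_continuous1 as C1; pose proof curve_continuous2 as C2.
  pose proof continuous_curvature as Hk.
  set (w := 2 * PI * IZR n / L).
  replace (I0 D1 D2 L)
    with (L * RInt (fun s => (curvature D1 D2 s - w / 2) ^ 2) 0 L + - (w / 2) ^ 2 * (L * L)).
  - apply Un_cv_ext with (2 := CV_plus _ _ _ _ (parseval_twisted (w / 2))
                                 (CV_mult _ _ _ _ (Un_cv_const (- (w / 2) ^ 2)) parseval_tangent)).
    intro N; rewrite sumZ_partial_sum_sym, <- sum_sym_scal, <- !sum_sym_coef_norm2 by continuity_R.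
    rewrite <- sum_sym_scal, <- sum_sym_plus; apply sum_sym_ext; intro z.
    rewrite coef_norm2_twisted, coef_norm2_tangent, fhat_norm2_eq by auto.
    unfold w; field; lra.
  - rewrite I0_eq_centered; fold w.
    rewrite (RInt_extR (fun s => (curvature D1 D2 s - w / 2) ^ 2)
               (fun s => ((curvature D1 D2 s - w) ^ 2 + w * curvature D1 D2 s) - 3 / 4 * w ^ 2))
      by (intro; field).
    rewrite RInt_minusR, RInt_plusR, RInt_scalR, RInt_constR, RInt_curvature by continuity_R.
    unfold w; field; lra.
Qed.

End ClosedCurve.
Lemma continuous_nonneg_RInt_eq0 (g : R -> R) L : 0 < L -> continuousR g ->
  (forall x, 0 <= x <= L -> 0 <= g x) -> RInt g 0 L = 0 -> forall x, 0 <= x <= L -> g x = 0.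
Proof.
  intros HL Hg Hpos Hint x0 Hx0.
  destruct (Rle_lt_or_eq_dec 0 (g x0) (Hpos x0 Hx0)) as [Hlt|Heq]; [exfalso | auto].
  destruct (continuity_pt_of_continuous g x0 (Hg x0) (g x0 / 2) ltac:(lra)) as [alp [Ha Hal]].
  set (a := Rmax 0 (x0 - alp / 2)); set (b := Rmin L (x0 + alp / 2)).
  assert (Hab : a < b) by (apply Rmax_lub_lt; apply Rmin_glb_lt; lra).
  assert (Ha0 : 0 <= a) by apply Rmax_l; assert (Ha1 : x0 - alp / 2 <= a) by apply Rmax_r.
  assert (HbL : b <= L) by apply Rmin_l; assert (Hb1 : b <= x0 + alp / 2) by apply Rmin_r.
  assert (I1 : 0 <= RInt g 0 a) by (apply RInt_ge0; auto; intros; apply Hpos; lra).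
  assert (I3 : 0 <= RInt g b L) by (apply RInt_ge0; auto; intros; apply Hpos; lra).
  assert (I2 : 0 < RInt g a b).
  { apply RInt_gt_0; [exact Hab | | intros; apply Hg].
    intros y Hy; destruct (Req_dec y x0) as [->|Hne]; [lra |].
    assert (Hy' : Rabs (g y - g x0) < g x0 / 2).
    { apply Hal; split; [split; [exact I | auto] | apply Rabs_def1; simpl; lra]. }
    apply Rabs_def2 in Hy'; lra. }
  assert (E : RInt g 0 L = RInt g 0 a + RInt g a b + RInt g b L :> R).
  { rewrite <- (RInt_Chasles (V := R_CompleteNormedModule) g 0 a L) by (apply ex_RInt_continuousR; auto).
    rewrite <- (RInt_Chasles (V := R_CompleteNormedModule) g a b L) by (apply ex_RInt_continuousR; auto).
    change plus with Rplus; ring. }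
  lra.
Qed.

Lemma periodic_nat (h : R -> R) L : (forall t, h (t + L) = h t) ->
  forall (k : nat) t, h (t + INR k * L) = h t.
Proof.
  intros H k; induction k; intro t; [simpl; f_equal; ring |].
  rewrite S_INR; replace (t + (INR k + 1) * L) with ((t + INR k * L) + L) by ring; rewrite H; auto.
Qed.

Lemma periodic_representative (L : R) s : 0 < L -> exists t, 0 <= t <= L /\
  forall h : R -> R, (forall t, h (t + L) = h t) -> h s = h t.
Proof.
  intros HL; destruct (archimed (s / L)) as [H1 H2].
  set (z := (up (s / L) - 1)%Z).
  assert (Hz : IZR z <= s / L < IZR z + 1) by (unfold z; rewrite minus_IZR; simpl; lra).
  exists (s - IZR z * L); split.
  - assert (IZR z * L <= s /\ s < (IZR z + 1) * L); [| lra].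
    split; [apply Rmult_le_reg_r with (/ L) | apply Rmult_lt_reg_r with (/ L)];
      try (apply Rinv_0_lt_compat; lra); field_simplify; try lra; unfold Rdiv in Hz; lra.
  - intros h Hh; destruct (Z_le_gt_dec 0 z) as [Hz0|Hz0].
    + rewrite <- (periodic_nat h L Hh (Z.to_nat z) (s - IZR z * L)), INR_IZR_INZ, Z2Nat.id by lia.
      f_equal; ring.
    + replace (s - IZR z * L) with (s + INR (Z.to_nat (- z)) * L); [rewrite periodic_nat; auto |].
      rewrite INR_IZR_INZ, Z2Nat.id, opp_IZR by lia; ring.
Qed.

Lemma derivable_zero_const (g : R -> R) : (forall x, derivable_pt_lim g x 0) -> forall s, g s = g 0.
Proof.
  intros H s; destruct (MVT_abs g (fun _ => 0) 0 s) as [c [Hc _]]; [intros; apply H |].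
  rewrite Rabs_R0, Rmult_0_l in Hc; apply Rabs_eq_0 in Hc; lra.
Qed.

Lemma unit_vector_angle a b : a ^ 2 + b ^ 2 = 1 -> exists t, cos t = a /\ sin t = b.
Proof.
  intros H; assert (Ha : -1 <= a <= 1) by nra.
  assert (Hs : sqrt (1 - a²) = Rabs b) by (rewrite <- sqrt_Rsqr_abs; f_equal; unfold Rsqr; nra).
  destruct (Rle_dec 0 b) as [Hb|Hb].
  - exists (acos a); rewrite cos_acos, sin_acos, Hs, Rabs_pos_eq; auto.
  - exists (- acos a); rewrite cos_neg, sin_neg, cos_acos, sin_acos, Hs, Rabs_left; auto; lra.
Qed.

Lemma derivable_pt_lim_cos_affine w t0 x :
  derivable_pt_lim (fun s => cos (w * s + t0)) x (- sin (w * x + t0) * w).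
Proof. apply is_derive_Reals; auto_derive; auto; real_eq; ring. Qed.
Lemma derivable_pt_lim_sin_affine w t0 x :
  derivable_pt_lim (fun s => sin (w * s + t0)) x (cos (w * x + t0) * w).
Proof. apply is_derive_Reals; auto_derive; auto; real_eq; ring. Qed.

Section ConstantCurvature.

Variables (D1 D2 : nat -> R -> R) (L w : R).
Hypothesis Hcurve : arclength_closed_curve D1 D2 L.
Hypothesis Hw : w <> 0.
Hypothesis Hkappa : forall s, curvature D1 D2 s = w.

(** The tangent turns at constant speed: [f'(s) e^(-i (w s + t0))] has zero derivative. *)
Lemma tangent_const_curvature : exists t0, forall s,
  D1 1%nat s = cos (w * s + t0) /\ D2 1%nat s = sin (w * s + t0).
Proof.
  assert (T : forall s, D1 2%nat s = - w * D2 1%nat s /\ D2 2%nat s = w * D1 1%nat s)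
    by (intro s; rewrite <- (Hkappa s); apply (acceleration_curvature D1 D2 L Hcurve s)).
  pose proof (curve_tower1 D1 D2 L Hcurve) as H1; pose proof (curve_tower2 D1 D2 L Hcurve) as H2.
  destruct (unit_vector_angle _ _ (curve_unit_speed D1 D2 L Hcurve 0)) as [t0 [Ht1 Ht2]].
  exists t0.
  set (phi := fun s => D1 1%nat s * cos (w * s + t0) + D2 1%nat s * sin (w * s + t0)).
  assert (Hphi : forall s, phi s = phi 0).
  { apply derivable_zero_const; intro x; destruct (T x) as [T1 T2].
    replace 0 with ((D1 2%nat x * cos (w * x + t0) + D1 1%nat x * (- sin (w * x + t0) * w))
                    + (D2 2%nat x * sin (w * x + t0) + D2 1%nat x * (cos (w * x + t0) * w)))
      by (rewrite T1, T2; ring).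
    apply derivable_pt_lim_plus_fun;
      [apply (derivable_pt_lim_mult_fun (D1 1%nat) (fun s => cos (w * s + t0)))
      | apply (derivable_pt_lim_mult_fun (D2 1%nat) (fun s => sin (w * s + t0)))];
      auto using derivable_pt_lim_cos_affine, derivable_pt_lim_sin_affine. }
  assert (Hphi0 : phi 0 = 1).
  { unfold phi; rewrite Rmult_0_r, Rplus_0_l, Ht1, Ht2, <- (curve_unit_speed D1 D2 L Hcurve 0); ring. }
  intro s; generalize (Hphi s) (curve_unit_speed D1 D2 L Hcurve s) (sin2_cos2 (w * s + t0)).
  rewrite Hphi0; unfold phi, Rsqr; intros A B C.
  assert (Z : (D1 1%nat s - cos (w * s + t0)) ^ 2 + (D2 1%nat s - sin (w * s + t0)) ^ 2 = 0) by nra.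
  generalize (pow2_ge_0 (D1 1%nat s - cos (w * s + t0))) (pow2_ge_0 (D2 1%nat s - sin (w * s + t0))).
  intros; split; apply Rminus_diag_uniq; nra.
Qed.

Lemma position_const_curvature : exists c1 c2 t0, forall s,
  D1 0%nat s = c1 + / w * sin (w * s + t0) /\ D2 0%nat s = c2 - / w * cos (w * s + t0).
Proof.
  destruct tangent_const_curvature as [t0 Tan].
  pose proof (curve_tower1 D1 D2 L Hcurve) as H1; pose proof (curve_tower2 D1 D2 L Hcurve) as H2.
  set (F1 := fun s => D1 0%nat s + (- / w) * sin (w * s + t0)).
  set (F2 := fun s => D2 0%nat s + / w * cos (w * s + t0)).
  assert (HF1 : forall s, F1 s = F1 0).
  { apply derivable_zero_const; intro x.
    replace 0 with (D1 1%nat x + (- / w) * (cos (w * x + t0) * w))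
      by (rewrite (proj1 (Tan x)); field; auto).
    apply (derivable_pt_lim_lin (D1 0%nat) (fun s => sin (w * s + t0)));
      auto using derivable_pt_lim_sin_affine. }
  assert (HF2 : forall s, F2 s = F2 0).
  { apply derivable_zero_const; intro x.
    replace 0 with (D2 1%nat x + / w * (- sin (w * x + t0) * w))
      by (rewrite (proj2 (Tan x)); field; auto).
    apply (derivable_pt_lim_lin (D2 0%nat) (fun s => cos (w * s + t0)));
      auto using derivable_pt_lim_cos_affine. }
  exists (F1 0), (F2 0), t0; intro s; rewrite <- (HF1 s), <- (HF2 s); unfold F1, F2; split; ring.
Qed.

End ConstantCurvature.

Lemma image_nfold_circle_of_I0_eq0 D1 D2 L n :
  arclength_closed_curve D1 D2 L -> rotation_number D1 D2 L = IZR n -> (1 <= n)%Z ->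
  I0 D1 D2 L = 0 -> image_is_nfold_circle (D1 0%nat) (D2 0%nat) L n.
Proof.
  intros Hc Hr Hn H0.
  pose proof (curve_length_pos D1 D2 L Hc) as HL; pose proof PI_RGT_0.
  set (w := 2 * PI * IZR n / L).
  assert (Hw : 0 < w) by (apply IZR_le in Hn; apply Rdiv_lt_0_compat; nra).
  rewrite (I0_eq_centered D1 D2 L Hc n Hr) in H0; fold w in H0.
  assert (HR : RInt (fun s => (curvature D1 D2 s - w) ^ 2) 0 L = 0)
    by (apply Rmult_integral in H0; destruct H0; [lra | auto]).
  assert (Hk : forall s, curvature D1 D2 s = w).
  { intro s; destruct (periodic_representative L s HL) as [t [Ht ->]];
      [| apply (curvature_periodic D1 D2 L Hc)].
    assert (Z : (curvature D1 D2 t - w) ^ 2 = 0).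
    { apply (continuous_nonneg_RInt_eq0 (fun s => (curvature D1 D2 s - w) ^ 2) L); auto;
        [| intros; apply pow2_ge_0].
      pose proof (continuous_curvature D1 D2 L Hc); continuity_R. }
    nra. }
  destruct (position_const_curvature D1 D2 L w Hc ltac:(lra) Hk) as [c1 [c2 [t0 Hpos]]].
  exists c1, c2, (/ w), ((t0 - PI / 2) / w); split; [apply Rinv_0_lt_compat; auto |].
  assert (Harg : forall s, 2 * PI * IZR n * (s + (t0 - PI / 2) / w) / L = w * s + t0 - PI / 2)
    by (intro; unfold w; field; apply IZR_le in Hn; repeat split; lra).
  assert (E : forall s, D1 0%nat s = c1 + / w * cos (2 * PI * IZR n * (s + (t0 - PI / 2) / w) / L)
                    /\ D2 0%nat s = c2 + / w * sin (2 * PI * IZR n * (s + (t0 - PI / 2) / w) / L)).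
  { intro s; rewrite Harg, (proj1 (Hpos s)), (proj2 (Hpos s)).
    replace (w * s + t0 - PI / 2) with (- (PI / 2 - (w * s + t0))) by ring.
    rewrite cos_neg, sin_neg, cos_shift, sin_shift; split; ring. }
  intros x y; split; intros [s [<- <-]]; exists s; rewrite (proj1 (E s)), (proj2 (E s)); auto.
Qed.

(** A function whose square is a positive constant cannot change sign, by the IVT. *)
Lemma continuous_sq_const (W : R -> R) r : continuity W -> 0 < r -> (forall s, W s * W s = r) ->
  forall s, W s = W 0.
Proof.
  intros HW Hr Hsq.
  assert (Hsign : forall a b, a <= b -> W a = W b).
  { intros a b Hab; destruct (Req_dec (W a) (W b)) as [E|E]; auto; exfalso.
    assert (E' : W a = - W b).
    { generalize (Hsq a) (Hsq b); intros; assert ((W a - W b) * (W a + W b) = 0) by nra.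
      apply Rmult_integral in H1; destruct H1; lra. }
    destruct (IVT_cor W a b HW Hab) as [z [_ Wz]]; [rewrite E'; generalize (Hsq b); nra |].
    generalize (Hsq z); rewrite Wz; nra. }
  intro s; destruct (Rle_dec 0 s); [symmetry |]; apply Hsign; lra.
Qed.

Section CircleImage.

Variables (D1 D2 : nat -> R -> R) (L c1 c2 r : R).
Hypothesis Hcurve : arclength_closed_curve D1 D2 L.
Hypothesis Hr : 0 < r.
Hypothesis Hcircle : forall s, (D1 0%nat s - c1) ^ 2 + (D2 0%nat s - c2) ^ 2 = r ^ 2.

Lemma circle_radial_derivatives s :
  (D1 0%nat s - c1) * D1 1%nat s + (D2 0%nat s - c2) * D2 1%nat s = 0 /\
  (D1 0%nat s - c1) * D1 2%nat s + (D2 0%nat s - c2) * D2 2%nat s = -1.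
Proof.
  pose proof (curve_tower1 D1 D2 L Hcurve) as H1; pose proof (curve_tower2 D1 D2 L Hcurve) as H2.
  set (X := fun s => D1 0%nat s - c1); set (Y := fun s => D2 0%nat s - c2).
  assert (HX : forall x, derivable_pt_lim X x (D1 1%nat x)).
  { intro x; apply (derivable_pt_lim_ext (fun s => D1 0%nat s + -1 * (fun _ => c1) s)); [intro; unfold X; ring |].
    rewrite <- (Rplus_0_r (D1 1%nat x)), <- (Rmult_0_r (-1)).
    apply derivable_pt_lim_lin; [apply H1 | apply derivable_pt_lim_const]. }
  assert (HY : forall x, derivable_pt_lim Y x (D2 1%nat x)).
  { intro x; apply (derivable_pt_lim_ext (fun s => D2 0%nat s + -1 * (fun _ => c2) s)); [intro; unfold Y; ring |].
    rewrite <- (Rplus_0_r (D2 1%nat x)), <- (Rmult_0_r (-1)).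
    apply derivable_pt_lim_lin; [apply H2 | apply derivable_pt_lim_const]. }
  set (h := fun s => X s * D1 1%nat s + Y s * D2 1%nat s).
  assert (Hh : forall x, h x = 0).
  { intro x.
    assert (A : derivable_pt_lim (fun s => X s * X s + Y s * Y s) x
                  ((D1 1%nat x * X x + X x * D1 1%nat x) + (D2 1%nat x * Y x + Y x * D2 1%nat x)))
      by (apply derivable_pt_lim_plus_fun; apply derivable_pt_lim_mult_fun; auto).
    assert (B : derivable_pt_lim (fun s => X s * X s + Y s * Y s) x 0).
    { apply (derivable_pt_lim_ext (fun _ => r ^ 2)); [| apply derivable_pt_lim_const].
      intro t; rewrite <- (Hcircle t); unfold X, Y; ring. }
    generalize (uniqueness_limite _ _ _ _ A B); unfold h; lra. }
  split; [apply Hh |].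
  assert (A : derivable_pt_lim h s
                ((D1 1%nat s * D1 1%nat s + X s * D1 2%nat s) + (D2 1%nat s * D2 1%nat s + Y s * D2 2%nat s)))
    by (apply derivable_pt_lim_plus_fun; apply derivable_pt_lim_mult_fun; auto).
  assert (B : derivable_pt_lim h s 0)
    by (apply (derivable_pt_lim_ext (fun _ => 0)); [intro; rewrite Hh; auto | apply derivable_pt_lim_const]).
  generalize (uniqueness_limite _ _ _ _ A B) (curve_unit_speed D1 D2 L Hcurve s); unfold X, Y; nra.
Qed.

(** With [W = (f - c) x f'], [kappa W = -1] and [W^2 = r^2]. *)
Lemma curvature_circle_const : forall s, curvature D1 D2 s = curvature D1 D2 0.
Proof.
  set (W := fun s => - (D1 0%nat s - c1) * D2 1%nat s + (D2 0%nat s - c2) * D1 1%nat s).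
  assert (HkW : forall s, curvature D1 D2 s * W s = -1).
  { intro s; destruct (acceleration_curvature D1 D2 L Hcurve s) as [T1 T2].
    rewrite <- (proj2 (circle_radial_derivatives s)), T1, T2; unfold W; ring. }
  assert (HW2 : forall s, W s * W s = r ^ 2).
  { intro s; rewrite <- (Hcircle s).
    generalize (proj1 (circle_radial_derivatives s)) (curve_unit_speed D1 D2 L Hcurve s); intros A B.
    transitivity (((D1 0%nat s - c1) ^ 2 + (D2 0%nat s - c2) ^ 2) * (D1 1%nat s ^ 2 + D2 1%nat s ^ 2)
                  - ((D1 0%nat s - c1) * D1 1%nat s + (D2 0%nat s - c2) * D2 1%nat s) ^ 2);
      [unfold W; ring | rewrite A, B; ring]. }
  assert (HWc : continuity W).
  { pose proof (curve_continuous1 D1 D2 L Hcurve); pose proof (curve_continuous2 D1 D2 L Hcurve).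
    intro x; apply continuity_pt_of_continuous; unfold W; continuity_tac. }
  pose proof (continuous_sq_const W (r ^ 2) HWc ltac:(nra) HW2) as HWs.
  intro s; generalize (HkW s) (HkW 0); rewrite (HWs s); intros A B.
  assert (W 0 <> 0) by (intro E; generalize (HW2 0); rewrite E; nra).
  apply Rmult_eq_reg_r with (W 0); auto; lra.
Qed.

End CircleImage.

Lemma I0_eq0_of_image_nfold_circle D1 D2 L n :
  arclength_closed_curve D1 D2 L -> rotation_number D1 D2 L = IZR n ->
  image_is_nfold_circle (D1 0%nat) (D2 0%nat) L n -> I0 D1 D2 L = 0.
Proof.
  intros Hc Hrot [c1 [c2 [r [sg [Hr Himg]]]]].
  pose proof (curve_length_pos D1 D2 L Hc) as HL.
  assert (Hcircle : forall s, (D1 0%nat s - c1) ^ 2 + (D2 0%nat s - c2) ^ 2 = r ^ 2).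
  { intro s; destruct (proj1 (Himg _ _) (ex_intro _ s (conj eq_refl eq_refl))) as [s' [<- <-]].
    generalize (sin2_cos2 (2 * PI * IZR n * (s' + sg) / L)); unfold Rsqr; intro; nra. }
  pose proof (curvature_circle_const D1 D2 L c1 c2 r Hc Hr Hcircle) as HK.
  assert (EK : curvature D1 D2 0 = 2 * PI * IZR n / L).
  { generalize (RInt_curvature D1 D2 L Hc n Hrot).
    rewrite (RInt_extR _ (fun _ => curvature D1 D2 0)), RInt_constR by auto.
    intro E; rewrite <- E; field; lra. }
  rewrite (I0_eq_centered D1 D2 L Hc n Hrot), (RInt_extR _ (fun _ => 0)), RInt_constR; [ring |].
  intro s; rewrite HK, EK; ring.
Qed.

Theorem mainTheorem2 (D1 D2 : nat -> R -> R) (L : R) (n : Z)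
  (Hcurve : arclength_closed_curve D1 D2 L)
  (Hrot : rotation_number D1 D2 L = IZR n)
  (Hn : (1 <= n)%Z) :
  Un_cv (fun N => 16 * PI^4 / L^3 *
           sumZ_partial (fun k => (IZR k)^3 * (IZR k - IZR n)
                                  * fhat_norm2 (D1 0%nat) (D2 0%nat) L k) N)
        (I0 D1 D2 L) /\
  Un_cv (fun N => 16 * PI^4 / L^3 *
           sumZ_partial (fun k => (IZR k)^2 * (IZR k - IZR n)^2
                                  * fhat_norm2 (D1 0%nat) (D2 0%nat) L k) N)
        (I0 D1 D2 L) /\
  0 <= I0 D1 D2 L /\
  (I0 D1 D2 L = 0 <-> image_is_nfold_circle (D1 0%nat) (D2 0%nat) L n).
Proof.
  split; [apply I0_series_cubic; auto |].
  split; [apply I0_series_sq; auto |].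
  split; [apply (I0_nonneg D1 D2 L Hcurve n Hrot) |].
  split; [apply image_nfold_circle_of_I0_eq0 | apply (I0_eq0_of_image_nfold_circle D1 D2 L n)]; auto.
Qed.
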